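(* Let $G=(V,E)$ be an infinite, connected, locally finite graph satisfying $(\mathrm{SP}_{\alpha,c})$ for some $\alpha\ge0$ and $c>0$. Then there exists a constant $c_1=c_1(\alpha,c)>0$ such that \[\mathrm P_{\mu_D}(X_k\in D)\le\left[\max_{u,v\in D}\frac{\pi(u)}{\pi(v)}\right]^{1/2}\exp\left[-c_1\min\left\{\frac{k}{\log^\alpha|D|},\,k^{1/(1+\alpha)}\right\}\right]\] for every finite nonempty set $D\subset V$ and every $k\ge0$.
   Context: $\pi(v)=\deg(v)$, $\pi(A)=\sum_{v\in A}\pi(v)$. $P$ is the simple random walk transition matrix. For finite $A\subset V$, $P_A(u,v)=P(u,v)\mathbf 1(u,v\in A)$, $I_A(u,v)=\mathbf 1(u=v\in A)$, and $\lambda(A)$ is the smallest eigenvalue of $I_A-P_A^2$ (as a matrix on $A$). Spectral profile: $\Lambda(L)=\inf\{\lambda(B):B\subset V\text{ finite nonempty},\ \pi(B)\le L\}$ if $L\ge\min_v\pi(v)$, and $\Lambda(L)=1$ otherwise. $(\mathrm{SP}_{\alpha,c})$: $\Lambda(x)^{-1}\le\frac1c\log^\alpha\bigl[x/\max_v\pi(v)\bigr]$ for every $x\ge2\max_v\pi(v)$. $\mu_D$ is the uniform measure on $D$ and $\mathrm P_{\mu_D}$ the law of simple random walk $(X_k)$ started from $\mu_D$. Convention: $k/\log^\alpha|D|=+\infty$ when $|D|=1$, $\alpha>0$. *)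

From Stdlib Require Import Reals List Relations ClassicalDescription.
Import ListNotations.
Open Scope R_scope.

Record LFGraph (V : Type) := {
  nbrs : V -> list V;
  nbrs_nodup : forall u, NoDup (nbrs u);
  nbrs_sym : forall u v, In v (nbrs u) -> In u (nbrs v);
  nbrs_irrefl : forall u, ~ In u (nbrs u)
}.
Arguments nbrs {V} l u.

Definition adj {V} (G : LFGraph V) (u v : V) : Prop := In v (nbrs G u).

Definition graph_connected {V} (G : LFGraph V) : Prop :=
  forall u v : V, clos_refl_trans V (adj G) u v.

Definition infinite_type (V : Type) : Prop :=
  forall l : list V, exists v, ~ In v l.

Definition deg {V} (G : LFGraph V) (v : V) : nat := length (nbrs G v).
Definition piv {V} (G : LFGraph V) (v : V) : R := INR (deg G v).

Definition sumR {T} (l : list T) (f : T -> R) : R :=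
  fold_right (fun x acc => f x + acc) 0 l.

Definition piset {V} (G : LFGraph V) (A : list V) : R := sumR A (piv G).

Definition indic (P : Prop) : R :=
  if excluded_middle_informative P then 1 else 0.

Definition Pmat {V} (G : LFGraph V) (u v : V) : R :=
  indic (adj G u v) / piv G u.

Fixpoint Pk {V} (G : LFGraph V) (k : nat) (u v : V) : R :=
  match k with
  | O => indic (u = v)
  | S k' => sumR (nbrs G u) (fun w => / piv G u * Pk G k' w v)
  end.

(* mu is a (real) eigenvalue of I_A - P_A^2, viewed as a matrix on A *)
Definition is_eigval_IPA2 {V} (G : LFGraph V) (A : list V) (mu : R) : Prop :=
  exists f : V -> R,
    (exists v, In v A /\ f v <> 0) /\
    forall u, In u A ->
      f u - sumR A (fun w => sumR A (fun x => Pmat G u x * Pmat G x w) * f w)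
      = mu * f u.

Definition is_lambda {V} (G : LFGraph V) (A : list V) (l : R) : Prop :=
  is_eigval_IPA2 G A l /\ forall mu, is_eigval_IPA2 G A mu -> l <= mu.

Definition is_inf (E : R -> Prop) (m : R) : Prop :=
  (forall x, E x -> m <= x) /\ (forall b, (forall x, E x -> b <= x) -> b <= m).

Definition is_Lambda {V} (G : LFGraph V) (L Lam : R) : Prop :=
  ((forall v, L < piv G v) /\ Lam = 1) \/
  ((exists v, piv G v <= L) /\
   is_inf (fun l => exists B : list V, B <> [] /\ NoDup B /\ piset G B <= L
                                       /\ is_lambda G B l) Lam).

Definition is_max_pi {V} (G : LFGraph V) (M : R) : Prop :=
  (forall v, piv G v <= M) /\ (exists v, piv G v = M).

(* (SP_{alpha,c}) : Lambda(x)^{-1} <= (1/c) log^alpha [x / max pi]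
   for all x >= 2 max pi (Lambda(x) is required positive so that its
   inverse is a genuine real number). *)
Definition SP_cond {V} (G : LFGraph V) (alpha c : R) : Prop :=
  exists M, is_max_pi G M /\
    forall x Lam, 2 * M <= x -> is_Lambda G x Lam ->
      0 < Lam /\ / Lam <= / c * Rpower (ln (x / M)) alpha.

Definition prob_return {V} (G : LFGraph V) (D : list V) (k : nat) : R :=
  / INR (length D) * sumR D (fun u => sumR D (fun v => Pk G k u v)).

Definition max_ratio {V} (G : LFGraph V) (D : list V) : R :=
  fold_right Rmax 0 (map (fun p => piv G (fst p) / piv G (snd p)) (list_prod D D)).

(* k^beta for real beta > 0, with 0^beta = 0 *)
Definition kpow (k : nat) (beta : R) : R :=
  match k with O => 0 | _ => Rpower (INR k) beta end.

(* min{ k / log^alpha |D|, k^{1/(1+alpha)} }, with k/log^alpha|D| = +infty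
   when |D| = 1 *)
Definition rate (alpha : R) (n k : nat) : R :=
  if Nat.eq_dec n 1 then kpow k (/ (1 + alpha))
  else Rmin (INR k / Rpower (ln (INR n)) alpha) (kpow k (/ (1 + alpha))).

(* Let U be the union of the k-balls around D, so that no walk of length k started in D leaves U,
   and let u_j = P_U^j 1_D be the iterates of the walk killed outside U.  Then
   P_{mu_D}(X_k in D) = |D|^{-1} sum_{x in D} u_k(x), and Cauchy-Schwarz against the weights 1/pi
   bounds this by (max pi(u)/pi(v))^{1/2} (E_k / pi(D))^{1/2}, where E_j = sum pi u_j^2.
   The energy E_j loses a definite fraction at every step: truncating u_j at level E_j / (4 pi(D))
   keeps half of the energy without increasing the Dirichlet form of I - P_U^2, and the set where
   the truncation or its image under P_U is large has measure O(pi(D)^2 / E_j), so the spectral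
   profile bounds lambda of that set from below.  This gives
   E_{j+1} <= E_j exp (- c' / log^alpha (4 |D| pi(D) / E_j)); iterating it until
   E_j <= pi(D) e^{-l} with l = max (ln (4 |D|)) (k^{1/(1+alpha)}) produces both regimes of the rate. *)

From Stdlib Require Import Reals List Lra Lia Permutation ClassicalDescription Classical Relations.
Import ListNotations.
Open Scope R_scope.

Lemma indic_true (P : Prop) : P -> indic P = 1.
Proof. intro H; unfold indic; destruct (excluded_middle_informative P); tauto. Qed.

Lemma indic_false (P : Prop) : ~ P -> indic P = 0.
Proof. intro H; unfold indic; destruct (excluded_middle_informative P); tauto. Qed.

Lemma indic_nonneg (P : Prop) : 0 <= indic P.
Proof. unfold indic; destruct (excluded_middle_informative P); lra. Qed.

Lemma indic_le1 (P : Prop) : indic P <= 1.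
Proof. unfold indic; destruct (excluded_middle_informative P); lra. Qed.

Definition eq_dec_classic {V : Type} (x y : V) : {x = y} + {x <> y} :=
  excluded_middle_informative (x = y).

Section FiniteSums.
Context {T : Type}.
Implicit Types (l : list T) (f g : T -> R).

Lemma sumR_cons (a : T) l f : sumR (a :: l) f = f a + sumR l f.
Proof. reflexivity. Qed.

Lemma sumR_ext l f g : (forall x, In x l -> f x = g x) -> sumR l f = sumR l g.
Proof. induction l; simpl; intros H; auto. rewrite H, IHl; auto. Qed.

Lemma sumR_le l f g : (forall x, In x l -> f x <= g x) -> sumR l f <= sumR l g.
Proof.
  induction l; simpl; intros H; [lra|].
  specialize (IHl (fun x h => H x (or_intror h))). specialize (H a (or_introl eq_refl)). lra.
Qed.

Lemma sumR_const l a : sumR l (fun _ => a) = INR (length l) * a.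
Proof. induction l; simpl; [lra|]. rewrite IHl. destruct (length l); simpl; lra. Qed.

Lemma sumR_zero l : sumR l (fun _ => 0) = 0.
Proof. rewrite sumR_const; ring. Qed.

Lemma sumR_nonneg l f : (forall x, In x l -> 0 <= f x) -> 0 <= sumR l f.
Proof. intro H. apply (sumR_le l (fun _ => 0) f) in H. rewrite sumR_zero in H; auto. Qed.

Lemma sumR_pos l f v :
  (forall x, In x l -> 0 <= f x) -> In v l -> 0 < f v -> 0 < sumR l f.
Proof.
  induction l; simpl; intros H Hv Hf; [tauto|]. destruct Hv as [<-|Hv].
  - pose proof (sumR_nonneg l f (fun x h => H x (or_intror h))). lra.
  - pose proof (IHl (fun x h => H x (or_intror h)) Hv Hf). pose proof (H a (or_introl eq_refl)). lra.
Qed.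

Lemma sumR_add l f g : sumR l (fun x => f x + g x) = sumR l f + sumR l g.
Proof. induction l; simpl; [lra|]. rewrite IHl; lra. Qed.

Lemma sumR_sub l f g : sumR l (fun x => f x - g x) = sumR l f - sumR l g.
Proof. induction l; simpl; [lra|]. rewrite IHl; lra. Qed.

Lemma sumR_scal_l l f c : sumR l (fun x => c * f x) = c * sumR l f.
Proof. induction l; simpl; [lra|]. rewrite IHl; lra. Qed.

Lemma sumR_scal_r l f c : sumR l (fun x => f x * c) = sumR l f * c.
Proof. induction l; simpl; [lra|]. rewrite IHl; lra. Qed.

Lemma sumR_comm {U : Type} l (l' : list U) (F : T -> U -> R) :
  sumR l (fun x => sumR l' (fun y => F x y)) = sumR l' (fun y => sumR l (fun x => F x y)).
Proof.
  induction l; simpl; [induction l'; simpl; lra|].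
  rewrite IHl; clear IHl. induction l'; simpl; lra.
Qed.

Lemma sumR_perm l l' f : Permutation l l' -> sumR l f = sumR l' f.
Proof. induction 1; simpl; lra. Qed.

Lemma sumR_filter_eq l (p : T -> bool) f :
  (forall x, In x l -> p x = false -> f x = 0) -> sumR l f = sumR (filter p l) f.
Proof.
  induction l; simpl; intros H; auto. destruct (p a) eqn:E; simpl.
  - rewrite IHl; auto.
  - rewrite H, IHl; auto; lra.
Qed.

Lemma sumR_filter_le l (p : T -> bool) f :
  (forall x, In x l -> 0 <= f x) -> sumR (filter p l) f <= sumR l f.
Proof.
  induction l; simpl; intros H; [lra|]. specialize (IHl (fun x h => H x (or_intror h))).
  specialize (H a (or_introl eq_refl)). destruct (p a); simpl; lra.
Qed.

Lemma sumR_filter_split l (p : T -> bool) f :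
  sumR l f = sumR (filter p l) f + sumR (filter (fun x => negb (p x)) l) f.
Proof. induction l; simpl; [lra|]. destruct (p a); simpl; rewrite IHl; lra. Qed.

Lemma cauchy_schwarz l f g :
  sumR l (fun x => f x * g x) ^ 2 <= sumR l (fun x => f x ^ 2) * sumR l (fun x => g x ^ 2).
Proof.
  set (A := sumR l (fun x => f x ^ 2)). set (B := sumR l (fun x => f x * g x)).
  set (C := sumR l (fun x => g x ^ 2)).
  assert (Hq : forall t, 0 <= t ^ 2 * A - 2 * t * B + C).
  { intro t. replace (t ^ 2 * A - 2 * t * B + C) with (sumR l (fun x => (t * f x - g x) ^ 2)).
    - apply sumR_nonneg; intros; apply pow2_ge_0.
    - unfold A, B, C. rewrite <- sumR_scal_l, <- sumR_scal_l, <- sumR_sub, <- sumR_add.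
      apply sumR_ext; intros; ring. }
  assert (HA : 0 <= A) by (apply sumR_nonneg; intros; apply pow2_ge_0).
  destruct (Req_dec A 0) as [HA0|HA0].
  - assert (HB0 : B = 0).
    { destruct (Req_dec B 0) as [|HB]; auto. specialize (Hq ((C + 1) / (2 * B))). rewrite HA0 in Hq.
      replace (((C + 1) / (2 * B)) ^ 2 * 0 - 2 * ((C + 1) / (2 * B)) * B + C) with (-1) in Hq
        by (field; auto). lra. }
    rewrite HB0, HA0. lra.
  - specialize (Hq (B / A)).
    replace ((B / A) ^ 2 * A - 2 * (B / A) * B + C) with ((A * C - B ^ 2) / A) in Hq by (field; auto).
    apply Rmult_le_compat_r with (r := A) in Hq; [|lra].
    replace ((A * C - B ^ 2) / A * A) with (A * C - B ^ 2) in Hq by (field; auto). lra.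
Qed.

Lemma cauchy_schwarz_weighted l (w f : T -> R) : (forall x, In x l -> 0 < w x) ->
  sumR l f ^ 2 <= sumR l (fun x => / w x) * sumR l (fun x => w x * f x ^ 2).
Proof.
  intro Hw. pose proof (cauchy_schwarz l (fun x => / sqrt (w x)) (fun x => sqrt (w x) * f x)) as H.
  assert (Hsq : forall x, In x l -> sqrt (w x) * sqrt (w x) = w x)
    by (intros x Hx; apply sqrt_sqrt; left; auto).
  assert (Hsp : forall x, In x l -> 0 < sqrt (w x)) by (intros x Hx; apply sqrt_lt_R0; auto).
  replace (sumR l f) with (sumR l (fun x => / sqrt (w x) * (sqrt (w x) * f x))).
  replace (sumR l (fun x => / w x)) with (sumR l (fun x => (/ sqrt (w x)) ^ 2)).
  replace (sumR l (fun x => w x * f x ^ 2)) with (sumR l (fun x => (sqrt (w x) * f x) ^ 2)).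
  - exact H.
  - apply sumR_ext; intros x Hx. rewrite <- (Hsq x Hx) at 2. ring.
  - apply sumR_ext; intros x Hx. rewrite <- (Hsq x Hx) at 2. specialize (Hsp x Hx). field. lra.
  - apply sumR_ext; intros x Hx. specialize (Hsp x Hx). field. lra.
Qed.

End FiniteSums.
Section SumsOverSubsets.
Context {V : Type}.
Implicit Types (U l : list V) (F : V -> R).

Definition memb l (y : V) : bool :=
  if excluded_middle_informative (In y l) then true else false.

Lemma memb_In l y : memb l y = true <-> In y l.
Proof. unfold memb; destruct (excluded_middle_informative (In y l)); split; congruence || tauto. Qed.

Lemma sumR_indic_In_filter U l F :
  sumR U (fun y => indic (In y l) * F y) = sumR (filter (memb l) U) F.
Proof.
  induction U as [|a U IH]; simpl; auto.
  unfold memb at 1; destruct (excluded_middle_informative (In a l)) as [Ha|Ha]; simpl.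
  - rewrite indic_true, IH by auto. ring.
  - rewrite indic_false, IH by auto. ring.
Qed.

Lemma sumR_indic_In U l F : NoDup U -> NoDup l -> incl l U ->
  sumR U (fun y => indic (In y l) * F y) = sumR l F.
Proof.
  intros HU Hl HlU. rewrite sumR_indic_In_filter. apply sumR_perm, NoDup_Permutation.
  - apply NoDup_filter, HU.
  - exact Hl.
  - intro y. rewrite filter_In, memb_In. intuition.
Qed.

Lemma sumR_indic_In_le U l : NoDup U -> sumR U (fun y => indic (In y l)) <= INR (length l).
Proof.
  intro HU. rewrite (sumR_ext U _ (fun y => indic (In y l) * 1)) by (intros; ring).
  rewrite sumR_indic_In_filter, sumR_const, Rmult_1_r. apply le_INR, NoDup_incl_length.
  - apply NoDup_filter, HU.
  - intros y Hy. apply filter_In in Hy. apply memb_In, Hy.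
Qed.

Lemma sumR_incl_le U l F : NoDup U -> NoDup l -> incl l U ->
  (forall x, In x U -> 0 <= F x) -> sumR l F <= sumR U F.
Proof.
  intros HU Hl HlU HF. rewrite <- sumR_indic_In with (U := U) by auto. apply sumR_le. intros x Hx.
  specialize (HF x Hx). pose proof (indic_le1 (In x l)). pose proof (indic_nonneg (In x l)). nra.
Qed.

Lemma sumR_In_le U F x : NoDup U -> In x U -> (forall y, In y U -> 0 <= F y) -> F x <= sumR U F.
Proof.
  intros HU Hx HF. replace (F x) with (sumR [x] F) by (simpl; ring).
  apply sumR_incl_le; auto.
  - repeat constructor; auto.
  - intros y [<-|[]]; auto.
Qed.

Lemma sumR_indic_eq U x F : NoDup U -> In x U -> sumR U (fun y => indic (x = y) * F y) = F x.
Proof.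
  induction U as [|a U IH]; simpl; intros HU Hx; [tauto|]. inversion HU; subst.
  destruct (classic (x = a)) as [<-|Hxa].
  - rewrite indic_true by auto. rewrite (sumR_ext U _ (fun _ => 0)), sumR_zero; [ring|].
    intros y Hy. rewrite indic_false; [ring|]. intros ->; tauto.
  - destruct Hx as [->|Hx]; [tauto|]. rewrite indic_false, IH by auto. ring.
Qed.

End SumsOverSubsets.

(** * Positive semidefinite quadratic forms *)

Section QuadraticForms.
Context {V : Type}.
Implicit Types (B : list V) (C : V -> V -> R) (f g : V -> R).

Definition QF B C f : R := sumR B (fun x => sumR B (fun y => C x y * f x * f y)).
Definition sq B f : R := sumR B (fun x => f x ^ 2).
Definition symmetric_on B C : Prop := forall x y, In x B -> In y B -> C x y = C y x.
Definition upd f (a : V) (t : R) : V -> R := fun x => if eq_dec_classic x a then t else f x.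

Lemma upd_eq f a t : upd f a t a = t.
Proof. unfold upd; destruct (eq_dec_classic a a); congruence. Qed.

Lemma upd_neq f a t x : x <> a -> upd f a t x = f x.
Proof. unfold upd; destruct (eq_dec_classic x a); congruence. Qed.

Lemma sumR_upd B (c : V -> R) f a t : ~ In a B ->
  sumR B (fun y => c y * upd f a t y) = sumR B (fun y => c y * f y).
Proof. intro Ha. apply sumR_ext. intros y Hy. rewrite upd_neq; auto. intros ->; tauto. Qed.

Lemma QF_upd B C f a t : ~ In a B -> QF B C (upd f a t) = QF B C f.
Proof.
  intro Ha. apply sumR_ext; intros x Hx; apply sumR_ext; intros y Hy.
  rewrite !upd_neq; auto; intros ->; tauto.
Qed.

Lemma QF_eq0 B C f : (forall x, In x B -> f x = 0) -> QF B C f = 0.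
Proof.
  intro H. unfold QF. rewrite (sumR_ext B _ (fun _ => 0)); [apply sumR_zero|].
  intros x Hx. rewrite (sumR_ext B _ (fun _ => 0)); [apply sumR_zero|].
  intros y Hy. rewrite H; auto; ring.
Qed.

Lemma sq_nonneg B f : 0 <= sq B f.
Proof. apply sumR_nonneg; intros; apply pow2_ge_0. Qed.

Lemma QF_cons a B C f : (forall x, In x B -> C x a = C a x) ->
  QF (a :: B) C f = C a a * f a ^ 2 + 2 * f a * sumR B (fun y => C a y * f y) + QF B C f.
Proof.
  intro Hs. unfold QF. rewrite !sumR_cons.
  rewrite (sumR_ext B (fun x => sumR (a :: B) (fun y => C x y * f x * f y))
             (fun x => C a x * f a * f x + sumR B (fun y => C x y * f x * f y))).
  2:{ intros x Hx. rewrite sumR_cons, Hs; auto. ring. }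
  rewrite sumR_add.
  rewrite (sumR_ext B (fun y => C a y * f a * f y) (fun y => f a * (C a y * f y))) by (intros; ring).
  rewrite sumR_scal_l. ring.
Qed.

Definition schur C (a x y : V) : R := C x y - C x a * C a y / C a a.

Lemma QF_cons_schur a B C f : 0 < C a a -> (forall x, In x B -> C x a = C a x) ->
  QF (a :: B) C f =
  C a a * (f a + sumR B (fun y => C a y * f y) / C a a) ^ 2 + QF B (schur C a) f.
Proof.
  intros Hc Hs. set (b := sumR B (fun y => C a y * f y)).
  assert (Hschur : QF B (schur C a) f = QF B C f - b ^ 2 / C a a).
  { unfold QF, schur.
    rewrite (sumR_ext B _ (fun x => sumR B (fun y => C x y * f x * f y) - (C a x * f x / C a a) * b)).
    2:{ intros x Hx. unfold b. rewrite <- sumR_scal_l, <- sumR_sub. apply sumR_ext. intros y Hy.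
        rewrite Hs; auto. field. lra. }
    rewrite sumR_sub, sumR_scal_r. unfold Rdiv. rewrite sumR_scal_r. fold b. field. lra. }
  rewrite QF_cons, Hschur by auto. fold b. field. lra.
Qed.

Lemma coercive_cons a B C : 0 < C a a -> (forall x, In x B -> C x a = C a x) ->
  (exists d, 0 < d /\ forall f, d * sq B f <= QF B (schur C a) f) ->
  exists d, 0 < d /\ forall f, d * sq (a :: B) f <= QF (a :: B) C f.
Proof.
  intros Hc Hsa [d' [Hd' Hd'f]]. set (c := C a a) in *.
  set (K := sumR B (fun y => C a y ^ 2)).
  assert (HK : 0 <= K) by (apply sumR_nonneg; intros; apply pow2_ge_0).
  set (q := 2 * K / c ^ 2 + 1).
  assert (Hq : 1 <= q).
  { enough (0 <= 2 * K / c ^ 2) by (unfold q; lra).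
    apply Rmult_le_pos; [lra|]. left; apply Rinv_0_lt_compat, pow_lt; lra. }
  set (d := Rmin (c / 4) (d' / q)).
  assert (Hd0 : 0 < d) by (apply Rmin_pos; [lra|apply Rdiv_lt_0_compat; lra]).
  assert (Hdc : d <= c / 4) by apply Rmin_l.
  assert (Hdq : d * q <= d').
  { assert (d <= d' / q) by apply Rmin_r.
    apply Rmult_le_compat_r with (r := q) in H; [|lra].
    replace (d' / q * q) with d' in H by (field; lra). exact H. }
  exists d. split; auto. intro f.
  rewrite QF_cons_schur by auto. change (sq (a :: B) f) with (f a ^ 2 + sq B f).
  set (b := sumR B (fun y => C a y * f y)). set (s := f a + b / c). set (S := sq B f).
  assert (HS : 0 <= S) by apply sq_nonneg.
  assert (Hb : b ^ 2 <= K * S) by apply (cauchy_schwarz B (fun y => C a y) f).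
  assert (Hfa : f a ^ 2 <= 2 * s ^ 2 + 2 * K * S / c ^ 2).
  { replace (f a) with (s - b / c) by (unfold s; ring).
    replace (2 * K * S / c ^ 2) with (2 * (K * S / c ^ 2)) by (field; lra).
    assert ((b / c) ^ 2 <= K * S / c ^ 2).
    { replace ((b / c) ^ 2) with (b ^ 2 / c ^ 2) by (field; lra).
      apply Rmult_le_compat_r; auto. left; apply Rinv_0_lt_compat, pow_lt; lra. }
    pose proof (pow2_ge_0 (s + b / c)). nra. }
  specialize (Hd'f f). fold S in Hd'f.
  assert (d * (f a ^ 2 + S) <= d * (2 * s ^ 2 + q * S)).
  { apply Rmult_le_compat_l; [lra|]. unfold q.
    replace ((2 * K / c ^ 2 + 1) * S) with (2 * K * S / c ^ 2 + S) by (field; lra). lra. }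
  change (C a a) with c. fold s. pose proof (pow2_ge_0 s). nra.
Qed.

Lemma psd_isotropic_or_coercive B : NoDup B -> forall C,
  symmetric_on B C -> (forall f, 0 <= QF B C f) ->
  (exists g, (exists v, In v B /\ g v <> 0) /\ QF B C g = 0) \/
  (exists d, 0 < d /\ forall f, d * sq B f <= QF B C f).
Proof.
  induction B as [|a B IH]; intros HB C Hs Hpsd.
  { right. exists 1. split; [lra|]. intro f. unfold sq, QF; simpl; lra. }
  inversion HB as [|? ? Ha HB']; subst.
  assert (Hsa : forall x, In x B -> C x a = C a x) by (intros; apply Hs; simpl; auto).
  set (e := upd (fun _ => 0) a 1).
  assert (Hea : e a = 1) by apply upd_eq.
  assert (QFe : QF (a :: B) C e = C a a).
  { rewrite QF_cons, Hea, QF_eq0 by (auto; intros x Hx; apply upd_neq; intros ->; tauto).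
    rewrite (sumR_ext B _ (fun _ => 0)), sumR_zero; [ring|].
    intros x Hx. unfold e. rewrite upd_neq; [ring|]. intros ->; tauto. }
  destruct (Req_dec (C a a) 0) as [Caa0|CaaNZ].
  { left. exists e. split; [exists a; simpl; split; auto; lra|]. rewrite QFe; auto. }
  assert (Hc : 0 < C a a) by (pose proof (Hpsd e); lra).
  set (b := fun f => sumR B (fun y => C a y * f y)).
  set (lift := fun f => upd f a (- b f / C a a)).
  assert (Hlift : forall f, QF (a :: B) C (lift f) = QF B (schur C a) f).
  { intro f. unfold lift. rewrite QF_cons_schur, upd_eq, sumR_upd, QF_upd by auto. fold (b f).
    replace (- b f / C a a + b f / C a a) with 0 by (field; lra). ring. }
  assert (Hs' : symmetric_on B (schur C a)).
  { intros x y Hx Hy. unfold schur. rewrite (Hs x y), (Hsa x), (Hsa y); simpl; auto. field. lra. }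
  assert (Hpsd' : forall f, 0 <= QF B (schur C a) f) by (intro f; rewrite <- Hlift; apply Hpsd).
  destruct (IH HB' (schur C a) Hs' Hpsd') as [[g [[v [Hv Hgv]] Hg0]] | Hcoer].
  - left. exists (lift g). split.
    + exists v. split; simpl; auto. unfold lift. rewrite upd_neq; auto. intros ->; tauto.
    + rewrite Hlift; auto.
  - right. apply coercive_cons; auto.
Qed.

Lemma QF_add_scal B C g w t : symmetric_on B C ->
  QF B C (fun x => g x + t * w x) =
  QF B C g + 2 * t * sumR B (fun x => sumR B (fun y => C x y * g x * w y)) + t ^ 2 * QF B C w.
Proof.
  intro Hs. set (L := sumR B (fun x => sumR B (fun y => C x y * g x * w y))).
  set (L' := sumR B (fun x => sumR B (fun y => C x y * w x * g y))).
  assert (HL : L' = L).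
  { unfold L, L'. rewrite sumR_comm. apply sumR_ext; intros x Hx; apply sumR_ext; intros y Hy.
    rewrite Hs; auto. ring. }
  transitivity (QF B C g + t * L + t * L' + t ^ 2 * QF B C w); [|rewrite HL; ring].
  unfold QF, L, L'. rewrite <- !sumR_scal_l, <- !sumR_add. apply sumR_ext; intros x Hx.
  rewrite <- !sumR_scal_l, <- !sumR_add. apply sumR_ext; intros y Hy. ring.
Qed.

Lemma psd_isotropic_kernel B C g w : symmetric_on B C -> (forall f, 0 <= QF B C f) ->
  QF B C g = 0 -> sumR B (fun x => sumR B (fun y => C x y * g x * w y)) = 0.
Proof.
  intros Hs Hpsd Hg. set (L := sumR B (fun x => sumR B (fun y => C x y * g x * w y))).
  set (Q := QF B C w). assert (HQ : 0 <= Q) by apply Hpsd.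
  destruct (Req_dec L 0) as [|HL]; auto. exfalso.
  set (t := - L / (Q + 1)).
  pose proof (Hpsd (fun x => g x + t * w x)) as H. rewrite QF_add_scal, Hg in H by auto. fold L Q in H.
  replace (0 + 2 * t * L + t ^ 2 * Q) with (- (L * L * (Q + 2) / (Q + 1) ^ 2)) in H
    by (unfold t; field; lra).
  assert (0 < L * L * (Q + 2) / (Q + 1) ^ 2).
  { apply Rdiv_lt_0_compat; [|apply pow_lt; lra]. apply Rmult_lt_0_compat; [|lra].
    destruct (Rlt_dec 0 L); [nra|]. assert (L < 0) by lra. nra. }
  lra.
Qed.

End QuadraticForms.

(** * Dirichlet forms of sub-Markovian kernels *)

Section DirichletForms.
Context {V : Type}.
Variables (U : list V) (p : V -> R) (A : V -> V -> R).

Definition dirichlet_form (g : V -> R) : R := sumR U (fun x => p x * g x ^ 2) - QF U A g.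

Hypothesis A_sym : symmetric_on U A.

Lemma dirichlet_form_expand g :
  dirichlet_form g = sumR U (fun x => (p x - sumR U (A x)) * g x ^ 2)
                     + / 2 * sumR U (fun x => sumR U (fun y => A x y * (g x - g y) ^ 2)).
Proof.
  unfold dirichlet_form, QF.
  set (G1 := sumR U (fun x => sumR U (fun y => A x y * g x ^ 2))).
  assert (E1 : sumR U (fun x => sumR U (fun y => A x y * (g x - g y) ^ 2)) =
               2 * G1 - 2 * sumR U (fun x => sumR U (fun y => A x y * g x * g y))).
  { transitivity (G1 + sumR U (fun x => sumR U (fun y => A x y * g y ^ 2))
                  - 2 * sumR U (fun x => sumR U (fun y => A x y * g x * g y))).
    - unfold G1. rewrite <- sumR_scal_l, <- sumR_add, <- sumR_sub. apply sumR_ext; intros x Hx.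
      rewrite <- sumR_scal_l, <- sumR_add, <- sumR_sub. apply sumR_ext; intros y Hy. ring.
    - enough (sumR U (fun x => sumR U (fun y => A x y * g y ^ 2)) = G1) by lra.
      unfold G1. rewrite sumR_comm. apply sumR_ext; intros x Hx. apply sumR_ext; intros y Hy.
      rewrite A_sym; auto. }
  assert (E2 : sumR U (fun x => (p x - sumR U (A x)) * g x ^ 2) =
               sumR U (fun x => p x * g x ^ 2) - G1).
  { unfold G1. rewrite <- sumR_sub. apply sumR_ext; intros x Hx. rewrite sumR_scal_r. ring. }
  rewrite E1, E2. field.
Qed.

Hypothesis A_nonneg : forall x y, In x U -> In y U -> 0 <= A x y.
Hypothesis A_row : forall x, In x U -> sumR U (A x) <= p x.

Lemma dirichlet_form_contraction g (phi : R -> R) :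
  (forall a, phi a ^ 2 <= a ^ 2) -> (forall a b, (phi a - phi b) ^ 2 <= (a - b) ^ 2) ->
  dirichlet_form (fun x => phi (g x)) <= dirichlet_form g.
Proof.
  intros H1 H2. rewrite !dirichlet_form_expand. apply Rplus_le_compat.
  - apply sumR_le; intros x Hx. apply Rmult_le_compat_l; [specialize (A_row x Hx); lra|apply H1].
  - apply Rmult_le_compat_l; [lra|]. apply sumR_le; intros x Hx. apply sumR_le; intros y Hy.
    apply Rmult_le_compat_l; auto.
Qed.

Lemma dirichlet_form_nonneg g : 0 <= dirichlet_form g.
Proof.
  replace 0 with (dirichlet_form (fun x => (fun _ => 0) (g x))).
  - apply (dirichlet_form_contraction g (fun _ => 0)).
    + intro a. pose proof (pow2_ge_0 a). lra.
    + intros a b. pose proof (pow2_ge_0 (a - b)). lra.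
  - unfold dirichlet_form. rewrite QF_eq0 by auto.
    rewrite (sumR_ext U _ (fun _ => 0)), sumR_zero; intros; simpl; ring.
Qed.

End DirichletForms.

(** * The simple random walk killed outside a finite set *)

Section KilledWalk.
Context {V : Type} (G : LFGraph V).
Hypothesis deg_pos : forall v, 0 < piv G v.

Definition adjacency (x y : V) : R := indic (adj G x y).

Lemma adjacency_sym x y : adjacency x y = adjacency y x.
Proof.
  unfold adjacency, adj. destruct (classic (In y (nbrs G x))) as [H|H].
  - rewrite !indic_true; auto. apply nbrs_sym, H.
  - rewrite !indic_false; auto. intro H'. apply H, nbrs_sym, H'.
Qed.

Lemma adjacency_nonneg x y : 0 <= adjacency x y.
Proof. apply indic_nonneg. Qed.

Lemma adjacency_row_le U z : NoDup U -> sumR U (adjacency z) <= piv G z.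
Proof. intro HU. apply sumR_indic_In_le, HU. Qed.

Lemma piv_Pmat z w : piv G z * Pmat G z w = adjacency z w.
Proof. unfold Pmat, adjacency. pose proof (deg_pos z). field. lra. Qed.

Definition wnorm2 (U : list V) (f : V -> R) : R := sumR U (fun x => piv G x * f x ^ 2).
Definition wmass (U : list V) (f : V -> R) : R := sumR U (fun x => piv G x * f x).

(* [killed U f] is [P_U f]; [two_step U x y = pi(x) P_U^2 (x, y)]. *)
Definition killed (U : list V) (f : V -> R) (z : V) : R := sumR U (fun w => Pmat G z w * f w).
Definition two_step (U : list V) (x y : V) : R :=
  sumR U (fun z => adjacency x z * adjacency z y / piv G z).
Definition dirichlet2 (U : list V) : (V -> R) -> R := dirichlet_form U (piv G) (two_step U).

Lemma wnorm2_nonneg U f : 0 <= wnorm2 U f.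
Proof. apply sumR_nonneg. intros x _. apply Rmult_le_pos; [left; auto|apply pow2_ge_0]. Qed.

Lemma wmass_le U f g : (forall x, In x U -> f x <= g x) -> wmass U f <= wmass U g.
Proof. intro H. apply sumR_le. intros x Hx. apply Rmult_le_compat_l; [left|]; auto. Qed.

Lemma two_step_sym U x y : two_step U x y = two_step U y x.
Proof.
  apply sumR_ext; intros z _. rewrite (adjacency_sym x z), (adjacency_sym z y). f_equal. ring.
Qed.

Lemma two_step_nonneg U x y : 0 <= two_step U x y.
Proof.
  apply sumR_nonneg. intros z _. apply Rmult_le_pos.
  - apply Rmult_le_pos; apply adjacency_nonneg.
  - left; apply Rinv_0_lt_compat; auto.
Qed.

Lemma two_step_row_le U x : NoDup U -> sumR U (two_step U x) <= piv G x.
Proof.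
  intro HU. unfold two_step. rewrite sumR_comm.
  apply Rle_trans with (sumR U (adjacency x)); [|apply adjacency_row_le; auto].
  apply sumR_le. intros z Hz.
  rewrite (sumR_ext U _ (fun y => (adjacency x z / piv G z) * adjacency z y))
    by (intros; unfold Rdiv; ring).
  rewrite sumR_scal_l. pose proof (adjacency_row_le U z HU). pose proof (deg_pos z).
  pose proof (adjacency_nonneg x z).
  apply Rle_trans with (adjacency x z / piv G z * piv G z).
  - apply Rmult_le_compat_l; auto. apply Rmult_le_pos; auto. left; apply Rinv_0_lt_compat; auto.
  - right. field. lra.
Qed.

Lemma dirichlet2_nonneg U f : NoDup U -> 0 <= dirichlet2 U f.
Proof.
  intro HU. apply dirichlet_form_nonneg.
  - intros x y _ _. apply two_step_sym.
  - intros; apply two_step_nonneg.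
  - intros; apply two_step_row_le; auto.
Qed.

Lemma killed_nonneg U f z : (forall x, In x U -> 0 <= f x) -> 0 <= killed U f z.
Proof.
  intro Hf. apply sumR_nonneg. intros w Hw. apply Rmult_le_pos; auto.
  unfold Pmat, Rdiv. apply Rmult_le_pos; [apply indic_nonneg|left; apply Rinv_0_lt_compat; auto].
Qed.

Lemma wmass_killed_le U f : NoDup U -> (forall x, In x U -> 0 <= f x) ->
  wmass U (killed U f) <= wmass U f.
Proof.
  intros HU Hf. unfold wmass, killed.
  rewrite (sumR_ext U _ (fun z => sumR U (fun w => adjacency w z * f w))).
  2:{ intros z Hz. rewrite <- sumR_scal_l. apply sumR_ext. intros w Hw.
      rewrite <- Rmult_assoc, piv_Pmat, adjacency_sym. reflexivity. }
  rewrite sumR_comm. apply sumR_le. intros w Hw. rewrite sumR_scal_r.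
  apply Rmult_le_compat_r; auto. apply adjacency_row_le; auto.
Qed.

Lemma wnorm2_killed U f : wnorm2 U (killed U f) = QF U (two_step U) f.
Proof.
  unfold wnorm2, QF, killed, two_step.
  transitivity (sumR U (fun z => / piv G z *
     (sumR U (fun x => adjacency z x * f x) * sumR U (fun y => adjacency z y * f y)))).
  - apply sumR_ext. intros z Hz. pose proof (deg_pos z).
    rewrite (sumR_ext U _ (fun w => / piv G z * (adjacency z w * f w))).
    2:{ intros w _. unfold Pmat, adjacency. field. lra. }
    rewrite sumR_scal_l. field. lra.
  - symmetry.
    rewrite (sumR_ext U _ (fun x => sumR U (fun z => sumR U (fun y =>
               / piv G z * ((adjacency z x * f x) * (adjacency z y * f y)))))).
    2:{ intros x Hx. rewrite sumR_comm. apply sumR_ext. intros y Hy.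
        rewrite <- sumR_scal_r, <- sumR_scal_r. apply sumR_ext. intros z Hz.
        rewrite (adjacency_sym x z). pose proof (deg_pos z). field. lra. }
    rewrite sumR_comm. apply sumR_ext. intros z Hz.
    rewrite <- (sumR_scal_r U (fun x => adjacency z x * f x)), <- sumR_scal_l.
    apply sumR_ext; intros x _. rewrite <- !sumR_scal_l. apply sumR_ext; intros; ring.
Qed.

Lemma dirichlet2_killed U f : dirichlet2 U f = wnorm2 U f - wnorm2 U (killed U f).
Proof. rewrite wnorm2_killed. reflexivity. Qed.

End KilledWalk.

(** * The bottom of the spectrum of [I_A - P_A^2] *)

Section BottomEigenvalue.
Context {V : Type} (G : LFGraph V).
Hypothesis deg_pos : forall v, 0 < piv G v.

Lemma sumR_PA2 X u f :
  sumR X (fun w => sumR X (fun x => Pmat G u x * Pmat G x w) * f w) =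
  / piv G u * sumR X (fun w => two_step G X u w * f w).
Proof.
  rewrite <- sumR_scal_l. apply sumR_ext. intros w _. unfold two_step.
  rewrite <- Rmult_assoc, <- sumR_scal_l. f_equal. apply sumR_ext. intros x _.
  unfold Pmat, adjacency. pose proof (deg_pos u). pose proof (deg_pos x). field. lra.
Qed.

Lemma eigval_rayleigh X mu : is_eigval_IPA2 G X mu ->
  exists f, 0 < wnorm2 G X f /\ dirichlet2 G X f = mu * wnorm2 G X f.
Proof.
  intros [f [[v [Hv Hfv]] Heq]]. exists f. split.
  - apply sumR_pos with v; auto.
    + intros x _. apply Rmult_le_pos; [left; auto|apply pow2_ge_0].
    + apply Rmult_lt_0_compat; auto. destruct (Rlt_dec 0 (f v)); [nra|]. assert (f v < 0) by lra. nra.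
  - unfold dirichlet2, dirichlet_form, wnorm2, QF.
    rewrite <- sumR_scal_l, <- sumR_sub. apply sumR_ext. intros u Hu.
    specialize (Heq u Hu). rewrite sumR_PA2 in Heq.
    rewrite (sumR_ext X _ (fun y => f u * (two_step G X u y * f y))) by (intros; ring).
    rewrite sumR_scal_l. pose proof (deg_pos u).
    replace (sumR X (fun w => two_step G X u w * f w)) with (piv G u * (f u - mu * f u)).
    + ring.
    + rewrite <- Heq. field. lra.
Qed.

Lemma lambda_nonneg B l : NoDup B -> is_lambda G B l -> 0 <= l.
Proof.
  intros HB [Hl _]. destruct (eigval_rayleigh B l Hl) as [f [Hf He]].
  pose proof (dirichlet2_nonneg G deg_pos B f HB). rewrite He in H.
  apply Rmult_le_reg_r with (wnorm2 G B f); auto. lra.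
Qed.

Variables (X : list V) (x0 : V).
Hypotheses (X_nodup : NoDup X) (x0_in : In x0 X).

Definition rayleigh_lower_bound (b : R) : Prop :=
  forall f, b * wnorm2 G X f <= dirichlet2 G X f.

Lemma rayleigh_inf_exists : exists m, rayleigh_lower_bound m /\
  forall b, rayleigh_lower_bound b -> b <= m.
Proof.
  set (e := fun y => indic (x0 = y)).
  assert (He : 0 < wnorm2 G X e).
  { apply sumR_pos with x0; auto.
    - intros; apply Rmult_le_pos; [left; auto|apply pow2_ge_0].
    - unfold e. rewrite indic_true by auto. pose proof (deg_pos x0). lra. }
  destruct (completeness rayleigh_lower_bound) as [m [Hub Hlub]].
  - exists (dirichlet2 G X e / wnorm2 G X e). intros b Hb. specialize (Hb e).
    apply Rmult_le_reg_r with (wnorm2 G X e); auto. replace (_ / _ * _) with (dirichlet2 G X e)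
      by (field; lra). exact Hb.
  - exists 0. intro f. rewrite Rmult_0_l. apply dirichlet2_nonneg; auto.
  - exists m. split; [|exact Hub]. intro f. destruct (wnorm2_nonneg G deg_pos X f) as [Hf|Hf].
    + apply Rmult_le_reg_r with (/ wnorm2 G X f); [apply Rinv_0_lt_compat; auto|].
      rewrite Rmult_assoc, Rinv_r, Rmult_1_r by lra. apply Hlub. intros b Hb.
      apply Rmult_le_reg_r with (wnorm2 G X f); auto.
      rewrite Rmult_assoc, Rinv_l, Rmult_1_r by lra. apply Hb.
    + rewrite <- Hf, Rmult_0_r. apply dirichlet2_nonneg; auto.
Qed.

Definition shifted_form (m : R) (x y : V) : R :=
  indic (x = y) * (piv G x * (1 - m)) - two_step G X x y.

Lemma QF_shifted_form m f : QF X (shifted_form m) f = dirichlet2 G X f - m * wnorm2 G X f.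
Proof.
  unfold QF, shifted_form, dirichlet2, dirichlet_form, wnorm2, QF.
  rewrite <- sumR_scal_l, <- !sumR_sub. apply sumR_ext. intros x Hx.
  rewrite (sumR_ext X _ (fun y => indic (x = y) * (piv G x * (1 - m) * f x * f y)
                                  - two_step G X x y * f x * f y)) by (intros; ring).
  rewrite sumR_sub, sumR_indic_eq by auto. ring.
Qed.

Lemma shifted_form_sym m : symmetric_on X (shifted_form m).
Proof.
  intros x y _ _. unfold shifted_form. rewrite two_step_sym.
  destruct (classic (x = y)) as [->|Hxy]; auto.
  rewrite !indic_false by congruence. ring.
Qed.

(* The infimum is attained: otherwise the shifted form would be coercive and could be raised further. *)
Lemma rayleigh_inf_eigval m : rayleigh_lower_bound m ->
  (forall b, rayleigh_lower_bound b -> b <= m) -> is_eigval_IPA2 G X m.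
Proof.
  intros Hm Hsup.
  assert (Hpsd : forall f, 0 <= QF X (shifted_form m) f)
    by (intro f; rewrite QF_shifted_form; specialize (Hm f); lra).
  destruct (psd_isotropic_or_coercive X X_nodup (shifted_form m) (shifted_form_sym m) Hpsd)
    as [[g [Hg Hg0]] | [d [Hd Hdf]]].
  - exists g. split; auto. intros u Hu.
    pose proof (psd_isotropic_kernel X _ g (fun y => indic (u = y)) (shifted_form_sym m) Hpsd Hg0)
      as HL.
    rewrite (sumR_ext X _ (fun x => shifted_form m u x * g x)) in HL.
    2:{ intros x Hx. rewrite (sumR_ext X _ (fun y => indic (u = y) * (shifted_form m x y * g x)))
          by (intros; ring).
        rewrite sumR_indic_eq, shifted_form_sym; auto. }
    unfold shifted_form in HL.
    rewrite (sumR_ext X _ (fun x => indic (u = x) * (piv G u * (1 - m) * g x)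
                                    - two_step G X u x * g x)) in HL by (intros; ring).
    rewrite sumR_sub, sumR_indic_eq in HL by auto.
    rewrite sumR_PA2. pose proof (deg_pos u).
    replace (sumR X (fun w => two_step G X u w * g w)) with (piv G u * (1 - m) * g u) by lra.
    field. lra.
  - exfalso. set (P := sumR X (piv G)).
    assert (HP : 0 < P) by (apply sumR_pos with x0; auto; intros; left; auto).
    enough (m + d / P <= m) by (assert (0 < d / P) by (apply Rdiv_lt_0_compat; auto); lra).
    apply Hsup. intro f. specialize (Hdf f). rewrite QF_shifted_form in Hdf.
    assert (Hsq : wnorm2 G X f <= P * sq X f).
    { unfold wnorm2, sq. rewrite <- sumR_scal_l. apply sumR_le. intros x Hx.
      apply Rmult_le_compat_r; [apply pow2_ge_0|].
      apply sumR_In_le; auto. intros; left; auto. }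
    assert (d / P * wnorm2 G X f <= d * sq X f).
    { apply Rmult_le_compat_l with (r := d / P) in Hsq; [|left; apply Rdiv_lt_0_compat; auto].
      replace (d / P * (P * sq X f)) with (d * sq X f) in Hsq by (field; lra). exact Hsq. }
    lra.
Qed.

Lemma lambda_exists : exists m, is_lambda G X m /\ rayleigh_lower_bound m.
Proof.
  destruct rayleigh_inf_exists as [m [Hm Hsup]]. exists m. split; auto. split.
  - apply rayleigh_inf_eigval; auto.
  - intros mu Hmu. destruct (eigval_rayleigh X mu Hmu) as [f [Hf Hfe]].
    apply Rmult_le_reg_r with (wnorm2 G X f); auto. rewrite <- Hfe. apply Hm.
Qed.

End BottomEigenvalue.

Lemma exp_le x y : x <= y -> exp x <= exp y.
Proof. intros [H|<-]; [left; apply exp_increasing; auto|lra]. Qed.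

Lemma ln_le x y : 0 < x -> x <= y -> ln x <= ln y.
Proof. intros H1 [H2|<-]; [left; apply ln_increasing; auto|lra]. Qed.

Lemma ln_le_sub1 x : 0 < x -> ln x <= x - 1.
Proof. intro H. pose proof (exp_ineq1_le (ln x)). rewrite exp_ln in H0; auto. lra. Qed.

Lemma ln_gt0 x : 1 < x -> 0 < ln x.
Proof. intro H. rewrite <- ln_1. apply ln_increasing; lra. Qed.

Lemma ln_ge0 x : 1 <= x -> 0 <= ln x.
Proof. intro H. rewrite <- ln_1. apply ln_le; lra. Qed.

Lemma ln_ge1 x : 4 <= x -> 1 <= ln x.
Proof. intro H. rewrite <- (ln_exp 1). apply ln_le; [apply exp_pos|]. pose proof exp_le_3. lra. Qed.

Lemma Rpower_pos x a : 0 < Rpower x a.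
Proof. apply exp_pos. Qed.

Lemma Rpower_ge1 x a : 1 <= x -> 0 <= a -> 1 <= Rpower x a.
Proof.
  intros Hx Ha. unfold Rpower. rewrite <- exp_0. apply exp_le.
  apply Rmult_le_pos; auto. apply ln_ge0; auto.
Qed.

Lemma Rle_div_r a b c : 0 < c -> (a <= b / c <-> a * c <= b).
Proof.
  intro Hc. split; intro H.
  - apply Rmult_le_compat_r with (r := c) in H; [|lra].
    replace (b / c * c) with b in H by (field; lra). exact H.
  - apply Rmult_le_reg_r with c; auto. replace (b / c * c) with b by (field; lra). exact H.
Qed.

Lemma Rle_div_l a b c : 0 < c -> (a / c <= b <-> a <= b * c).
Proof.
  intro Hc. split; intro H.
  - apply Rmult_le_compat_r with (r := c) in H; [|lra].
    replace (a / c * c) with a in H by (field; lra). exact H.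
  - apply Rmult_le_reg_r with c; auto. replace (a / c * c) with a by (field; lra). exact H.
Qed.

Definition log_absorb_const (alpha c : R) : R :=
  2 * (1 + alpha + ln (1 + 2 / c) + alpha * ln (2 * alpha + 2)).

Lemma log_absorb_const_ge alpha c : 0 <= alpha -> 0 < c ->
  2 + 2 * alpha <= log_absorb_const alpha c.
Proof.
  intros Ha Hc. unfold log_absorb_const.
  assert (0 <= ln (1 + 2 / c)) by (apply ln_ge0; pose proof (Rdiv_lt_0_compat 2 c); lra).
  assert (0 <= alpha * ln (2 * alpha + 2)) by (apply Rmult_le_pos; auto; apply ln_ge0; lra).
  lra.
Qed.

Lemma log_absorb alpha c L : 0 <= alpha -> 0 < c -> 1 <= L ->
  L + ln (1 + 2 * Rpower (log_absorb_const alpha c * L) alpha / c) <= log_absorb_const alpha c * L.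
Proof.
  intros Ha Hc HL. pose proof (log_absorb_const_ge alpha c Ha Hc) as HK.
  assert (HKdef : log_absorb_const alpha c
                  = 2 * (1 + alpha + ln (1 + 2 / c) + alpha * ln (2 * alpha + 2))) by reflexivity.
  set (K := log_absorb_const alpha c) in *.
  set (P := Rpower (K * L) alpha).
  assert (HP : 1 <= P) by (apply Rpower_ge1; nra).
  assert (H2c : 0 < 2 / c) by (apply Rdiv_lt_0_compat; lra).
  assert (E1 : ln (1 + 2 * P / c) <= ln (1 + 2 / c) + ln P).
  { rewrite <- ln_mult by lra. apply ln_le.
    - pose proof (Rdiv_lt_0_compat (2 * P) c). lra.
    - replace (2 * P / c) with (2 / c * P) by (field; lra). nra. }
  assert (E2 : ln P = alpha * (ln K + ln L)) by (unfold P; rewrite ln_Rpower, ln_mult; lra).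
  assert (E3 : ln L <= L - 1) by (apply ln_le_sub1; lra).
  assert (E4 : ln K <= ln (2 * alpha + 2) + K / (2 * alpha + 2) - 1).
  { replace K with ((2 * alpha + 2) * (K / (2 * alpha + 2))) at 1 by (field; lra).
    assert (0 < K / (2 * alpha + 2)) by (apply Rdiv_lt_0_compat; lra).
    rewrite ln_mult by lra. pose proof (ln_le_sub1 (K / (2 * alpha + 2))). lra. }
  assert (E5 : alpha * (K / (2 * alpha + 2)) <= K / 2).
  { replace (alpha * (K / (2 * alpha + 2))) with (K / 2 * (2 * alpha / (2 * alpha + 2)))
      by (field; lra).
    assert (0 <= 2 * alpha / (2 * alpha + 2) <= 1).
    { split; [apply Rmult_le_pos; [lra|left; apply Rinv_0_lt_compat; lra]|].
      apply Rmult_le_reg_r with (2 * alpha + 2); [lra|].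
      replace (2 * alpha / (2 * alpha + 2) * (2 * alpha + 2)) with (2 * alpha) by (field; lra). lra. }
    nra. }
  assert (E6 : alpha * ln K <= alpha * ln (2 * alpha + 2) + K / 2 - alpha).
  { pose proof (Rmult_le_compat_l alpha _ _ Ha E4). lra. }
  assert (E7 : alpha * ln L <= alpha * (L - 1)) by (apply Rmult_le_compat_l; auto).
  assert (E8 : K - 1 - alpha <= (K - 1 - alpha) * L) by nra.
  rewrite E2 in E1. lra.
Qed.

(** * From the spectral profile to a Faber–Krahn inequality *)

Section FaberKrahn.
Context {V : Type} (G : LFGraph V).
Hypothesis deg_pos : forall v, 0 < piv G v.

Definition faber_krahn (alpha c M : R) : Prop :=
  forall B l x Y, NoDup B -> is_lambda G B l -> piset G B <= x -> 2 * M <= x -> ln (x / M) <= Y ->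
  c / Rpower Y alpha <= l.

Lemma lambda_support_nonempty B l : is_lambda G B l -> B <> [].
Proof. intros [[f [[v [Hv _]] _]] _] ->. destruct Hv. Qed.

Lemma SP_faber_krahn alpha c : 0 <= alpha -> 0 < c -> SP_cond G alpha c ->
  exists M, 0 < M /\ (forall v, piv G v <= M) /\ faber_krahn alpha c M.
Proof.
  intros Ha Hc [M [[HM1 [v0 Hv0]] HSP]].
  assert (HM : 0 < M) by (rewrite <- Hv0; auto).
  exists M. split; auto. split; auto. intros B l x Y HB Hl HBx Hx HY.
  set (Es := fun l => exists B : list V, B <> [] /\ NoDup B /\ piset G B <= x /\ is_lambda G B l).
  assert (HBl : Es l) by (exists B; split; [exact (lambda_support_nonempty B l Hl)|auto]).
  destruct (completeness (fun r => Es (- r))) as [m [Hub Hlub]].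
  - exists 0. intros r [B' [_ [HB' [_ Hl']]]]. pose proof (lambda_nonneg G deg_pos B' _ HB' Hl'). lra.
  - exists (- l). rewrite Ropp_involutive. exact HBl.
  - set (Lam := - m).
    assert (Hinf : is_inf Es Lam).
    { split.
      - intros r Hr. enough (- r <= m) by (unfold Lam; lra). apply Hub.
        rewrite Ropp_involutive. exact Hr.
      - intros b Hb. enough (m <= - b) by (unfold Lam; lra). apply Hlub.
        intros r Hr. apply Hb in Hr. lra. }
    assert (Hv0x : piv G v0 <= x) by lra.
    destruct (HSP x Lam Hx (or_intror (conj (ex_intro _ v0 Hv0x) Hinf))) as [HLpos HLb].
    assert (HxM : 2 <= x / M) by (apply Rle_div_r; lra).
    assert (Hln : 0 < ln (x / M)) by (apply ln_gt0; lra).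
    assert (HRY : 0 < Rpower Y alpha) by apply Rpower_pos.
    assert (Hinv : / Lam <= Rpower Y alpha / c).
    { eapply Rle_trans; [exact HLb|]. rewrite Rmult_comm. apply Rmult_le_compat_r.
      - left; apply Rinv_0_lt_compat; lra.
      - apply Rle_Rpower_l; lra. }
    apply Rle_trans with Lam; [|apply Hinf; exact HBl].
    replace (c / Rpower Y alpha) with (/ (Rpower Y alpha / c)) by (field; lra).
    rewrite <- (Rinv_inv Lam). apply Rinv_le_contravar; [apply Rinv_0_lt_compat; lra|exact Hinv].
Qed.

End FaberKrahn.

(** * Energy decay in one step of the killed walk *)

Definition trunc (s a : R) : R := Rmax (a - s) 0.

Lemma trunc_nonneg s a : 0 <= trunc s a.
Proof. apply Rmax_r. Qed.

Lemma trunc_le s a : 0 <= s -> 0 <= a -> trunc s a <= a.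
Proof. intros Hs Ha. apply Rmax_lub; lra. Qed.

Lemma trunc_pos s a : 0 < trunc s a -> s < a.
Proof. unfold trunc, Rmax. destruct (Rle_dec (a - s) 0); lra. Qed.

Lemma trunc_sq_le s a : 0 <= s -> trunc s a ^ 2 <= a ^ 2.
Proof. intro Hs. unfold trunc, Rmax. destruct (Rle_dec (a - s) 0); simpl; nra. Qed.

Lemma trunc_lipschitz s a b : (trunc s a - trunc s b) ^ 2 <= (a - b) ^ 2.
Proof.
  unfold trunc, Rmax. pose proof (pow2_ge_0 (a - b)).
  destruct (Rle_dec (a - s) 0), (Rle_dec (b - s) 0); simpl.
  - lra.
  - assert (0 <= (b - s) * (s - a)) by (apply Rmult_le_pos; lra). nra.
  - assert (0 <= (a - s) * (s - b)) by (apply Rmult_le_pos; lra). nra.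
  - lra.
Qed.

Lemma trunc_sq_ge s a : 0 <= a -> a ^ 2 - 2 * s * a <= trunc s a ^ 2.
Proof. intro Ha. unfold trunc, Rmax. destruct (Rle_dec (a - s) 0); simpl; nra. Qed.

Section OneStep.
Context {V : Type} (G : LFGraph V).
Hypothesis deg_pos : forall v, 0 < piv G v.
Variable U : list V.
Hypothesis U_nodup : NoDup U.

Lemma wnorm2_trunc_ge g s : (forall x, In x U -> 0 <= g x) ->
  wnorm2 G U g - 2 * s * wmass G U g <= wnorm2 G U (fun x => trunc s (g x)).
Proof.
  intro Hg. unfold wnorm2, wmass. rewrite <- sumR_scal_l, <- sumR_sub. apply sumR_le.
  intros x Hx. pose proof (trunc_sq_ge s (g x) (Hg x Hx)). pose proof (deg_pos x). nra.
Qed.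

Lemma dirichlet2_trunc_le g s : 0 <= s -> dirichlet2 G U (fun x => trunc s (g x)) <= dirichlet2 G U g.
Proof.
  intro Hs. apply dirichlet_form_contraction.
  - intros x y _ _. apply two_step_sym.
  - intros; apply two_step_nonneg; auto.
  - intros; apply two_step_row_le; auto.
  - intro a. apply trunc_sq_le; auto.
  - apply trunc_lipschitz.
Qed.

Definition active_set (h : V -> R) (t : R) : list V :=
  filter (fun z => if Rlt_dec 0 (h z) then true else
                   if Rlt_dec t (killed G U h z) then true else false) U.

Lemma active_set_incl h t : incl (active_set h t) U.
Proof. intros z Hz. apply filter_In in Hz. tauto. Qed.

Lemma active_set_nodup h t : NoDup (active_set h t).
Proof. apply NoDup_filter, U_nodup. Qed.

Lemma active_set_spec h t z : In z (active_set h t) <-> In z U /\ (0 < h z \/ t < killed G U h z).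
Proof.
  unfold active_set. rewrite filter_In.
  destruct (Rlt_dec 0 (h z)), (Rlt_dec t (killed G U h z)); intuition (try congruence; lra).
Qed.

Lemma killed_active_set h t z : (forall x, In x U -> 0 <= h x) ->
  killed G U h z = killed G (active_set h t) h z.
Proof.
  intro Hh. apply sumR_filter_eq. intros x Hx Hp.
  enough (h x = 0) by (rewrite H; ring).
  destruct (Rlt_dec 0 (h x)); [discriminate|]. specialize (Hh x Hx). lra.
Qed.

Lemma wnorm2_active_set h t : (forall x, In x U -> 0 <= h x) ->
  wnorm2 G (active_set h t) h = wnorm2 G U h.
Proof.
  intro Hh. symmetry. apply sumR_filter_eq. intros x Hx Hp.
  enough (h x = 0) by (rewrite H; ring).
  destruct (Rlt_dec 0 (h x)); [discriminate|]. specialize (Hh x Hx). lra.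
Qed.

(* Off the active set [P_U h <= t], so that part of [|P_U h|^2] is controlled by the mass. *)
Lemma wnorm2_killed_le_active h t : (forall x, In x U -> 0 <= h x) -> 0 <= t ->
  wnorm2 G U (killed G U h) <=
  QF (active_set h t) (two_step G (active_set h t)) h + t * wmass G U h.
Proof.
  intros Hh Ht. set (B := active_set h t). set (Ph := killed G U h).
  assert (HPh : forall z, 0 <= Ph z) by (intro z; apply killed_nonneg; auto).
  unfold wnorm2. rewrite (sumR_filter_split U (fun z => if Rlt_dec 0 (h z) then true else
                                   if Rlt_dec t (Ph z) then true else false)).
  apply Rplus_le_compat.
  - rewrite <- wnorm2_killed by auto. apply Req_le, sumR_ext. intros z _.
    unfold Ph. rewrite (killed_active_set h t) by auto. reflexivity.
  - apply Rle_trans with (t * sumR (filter (fun x => negb (if Rlt_dec 0 (h x) then true else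
                              if Rlt_dec t (Ph x) then true else false)) U) (fun z => piv G z * Ph z)).
    + rewrite <- sumR_scal_l. apply sumR_le. intros z Hz. apply filter_In in Hz as [_ Hp].
      assert (Ph z <= t).
      { destruct (Rlt_dec 0 (h z)); [discriminate|]. destruct (Rlt_dec t (Ph z)); [discriminate|]. lra. }
      pose proof (deg_pos z). pose proof (HPh z).
      assert (0 <= piv G z * Ph z * (t - Ph z)) by (apply Rmult_le_pos; nra). nra.
    + apply Rmult_le_compat_l; auto. apply Rle_trans with (wmass G U Ph).
      * apply sumR_filter_le. intros; apply Rmult_le_pos; [left|]; auto.
      * apply wmass_killed_le; auto.
Qed.

Lemma piset_active_set_le g s t : (forall x, In x U -> 0 <= g x) -> 0 < s -> 0 < t ->
  piset G (active_set (fun x => trunc s (g x)) t) <= wmass G U g / s + wmass G U g / t.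
Proof.
  intros Hg Hs Ht. set (h := fun x => trunc s (g x)). set (B := active_set h t).
  assert (Hhg : wmass G U h <= wmass G U g)
    by (apply (wmass_le G deg_pos); intros; apply trunc_le; auto; lra).
  assert (HPh : wmass G U (killed G U h) <= wmass G U g).
  { eapply Rle_trans; [apply wmass_killed_le; auto|exact Hhg]. intros; apply trunc_nonneg. }
  unfold piset.
  apply Rle_trans with (sumR B (fun z => piv G z * g z / s + piv G z * killed G U h z / t)).
  - apply sumR_le. intros z Hz. apply active_set_spec in Hz as [HzU Hz].
    pose proof (deg_pos z). pose proof (Hg z HzU).
    pose proof (killed_nonneg G deg_pos U h z (fun x _ => trunc_nonneg s (g x))).
    assert (0 <= piv G z * g z / s) by (apply (Rle_div_r 0); nra).
    assert (0 <= piv G z * killed G U h z / t) by (apply (Rle_div_r 0); nra).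
    destruct Hz as [Hz|Hz].
    + apply trunc_pos in Hz. assert (piv G z <= piv G z * g z / s) by (apply Rle_div_r; nra). lra.
    + assert (piv G z <= piv G z * killed G U h z / t) by (apply Rle_div_r; nra). lra.
  - rewrite sumR_add. unfold Rdiv. rewrite !sumR_scal_r.
    assert (Hsub : forall f, (forall x, In x U -> 0 <= f x) ->
                             sumR B (fun z => piv G z * f z) <= wmass G U f).
    { intros f Hf. unfold wmass.
      apply sumR_incl_le; [exact U_nodup|apply active_set_nodup|apply active_set_incl|].
      intros; apply Rmult_le_pos; [left|]; auto. }
    apply Rplus_le_compat; apply Rmult_le_compat_r; try (left; apply Rinv_0_lt_compat; auto).
    + apply Hsub; auto.
    + eapply Rle_trans; [apply Hsub|exact HPh]. intros; apply killed_nonneg; auto.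
      intros; apply trunc_nonneg.
Qed.

Lemma wnorm2_trunc_half g S : (forall x, In x U -> 0 <= g x) -> wmass G U g <= S -> 0 < S ->
  wnorm2 G U g / 2 <= wnorm2 G U (fun x => trunc (wnorm2 G U g / (4 * S)) (g x)).
Proof.
  intros Hg HgS HS. eapply Rle_trans; [|apply wnorm2_trunc_ge; auto].
  set (s := wnorm2 G U g / (4 * S)).
  assert (Hs : 0 <= s) by (apply (Rle_div_r 0); [lra|]; rewrite Rmult_0_l; apply wnorm2_nonneg; auto).
  assert (2 * s * wmass G U g <= 2 * s * S) by (apply Rmult_le_compat_l; lra).
  replace (2 * s * S) with (wnorm2 G U g / 2) in H by (unfold s; field; lra). lra.
Qed.

Lemma active_set_lambda h t : (forall x, In x U -> 0 <= h x) -> 0 < wnorm2 G U h ->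
  exists m, is_lambda G (active_set h t) m /\ rayleigh_lower_bound G (active_set h t) m.
Proof.
  intros Hh Hpos. pose proof (active_set_nodup h t) as HB.
  rewrite <- (wnorm2_active_set h t Hh) in Hpos.
  destruct (active_set h t) as [|x0 B0]; [simpl in Hpos; lra|].
  apply (lambda_exists G deg_pos (x0 :: B0) x0 HB (or_introl eq_refl)).
Qed.

Lemma killed_energy_drop g s t m : (forall x, In x U -> 0 <= g x) -> 0 <= s -> 0 <= t ->
  rayleigh_lower_bound G (active_set (fun x => trunc s (g x)) t) m ->
  wnorm2 G U (killed G U g) <=
  wnorm2 G U g - m * wnorm2 G U (fun x => trunc s (g x)) + t * wmass G U g.
Proof.
  intros Hg Hs Ht Hm. set (h := fun x => trunc s (g x)). set (B := active_set h t).
  assert (Hh : forall x, In x U -> 0 <= h x) by (intros; apply trunc_nonneg).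
  pose proof (dirichlet2_trunc_le g s Hs) as Hcontr.
  rewrite !(dirichlet2_killed G deg_pos) in Hcontr.
  pose proof (wnorm2_killed_le_active h t Hh Ht) as HPh.
  assert (HmB : m * wnorm2 G U h <= wnorm2 G U h - QF B (two_step G B) h).
  { rewrite <- (wnorm2_active_set h t Hh). apply (Hm h). }
  assert (Hmass : t * wmass G U h <= t * wmass G U g)
    by (apply Rmult_le_compat_l, (wmass_le G deg_pos); auto; intros; apply trunc_le; auto).
  fold h B in Hcontr, HPh. lra.
Qed.

End OneStep.

Lemma ln_volume_le alpha c M n S E : 0 <= alpha -> 0 < c -> 0 < M -> 1 <= n -> S <= n * M ->
  0 < E <= S ->
  ln (Rmax (2 * M)
            (S * S / E * (4 + 8 * Rpower (log_absorb_const alpha c * ln (4 * n * S / E)) alpha / c)) / M)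
  <= log_absorb_const alpha c * ln (4 * n * S / E).
Proof.
  intros Ha Hc HM Hn HSn [HE HES].
  set (L := ln (4 * n * S / E)). set (R0 := Rpower (log_absorb_const alpha c * L) alpha).
  assert (HX : 4 <= 4 * n * S / E) by (apply Rle_div_r; nra).
  assert (HL : 1 <= L) by (apply ln_ge1; auto).
  assert (HR0 : 0 < R0) by apply Rpower_pos.
  assert (HR0c : 0 < 8 * R0 / c) by (apply Rdiv_lt_0_compat; lra).
  assert (HSE : 1 <= S / E) by (apply Rle_div_r; lra).
  assert (Hx : Rmax (2 * M) (S * S / E * (4 + 8 * R0 / c)) / M <= 4 * n * S / E * (1 + 2 * R0 / c)).
  { replace (4 * n * S / E * (1 + 2 * R0 / c)) with (n * (S / E) * (4 + 8 * R0 / c)) by (field; lra).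
    apply Rmax_case_strong; intros _.
    - replace (2 * M / M) with 2 by (field; lra). nra.
    - replace (S * S / E * (4 + 8 * R0 / c) / M) with (S / M * (S / E * (4 + 8 * R0 / c)))
        by (field; lra).
      rewrite (Rmult_assoc n). apply Rmult_le_compat_r; [apply Rmult_le_pos; lra|].
      apply Rle_div_l; lra. }
  eapply Rle_trans; [apply ln_le; [|exact Hx]|].
  - apply Rdiv_lt_0_compat; [|lra]. eapply Rlt_le_trans; [|apply Rmax_l]. lra.
  - assert (0 <= 2 * R0 / c) by (apply (Rle_div_r 0); lra).
    rewrite ln_mult by lra. apply log_absorb; auto.
Qed.

Definition decay_rate (alpha c : R) : R := 3 * c / (8 * Rpower (log_absorb_const alpha c) alpha).

Lemma decay_rate_pos alpha c : 0 < c -> 0 < decay_rate alpha c.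
Proof.
  intro Hc. apply Rdiv_lt_0_compat; [lra|].
  pose proof (Rpower_pos (log_absorb_const alpha c) alpha). lra.
Qed.

Lemma killed_energy_step {V} (G : LFGraph V) (U : list V) alpha c M n S g :
  (forall v, 0 < piv G v) -> NoDup U -> 0 <= alpha -> 0 < c -> 0 < M -> faber_krahn G alpha c M ->
  (forall x, In x U -> 0 <= g x) -> wmass G U g <= S -> 1 <= n -> S <= n * M ->
  0 < wnorm2 G U g <= S ->
  wnorm2 G U (killed G U g) <=
  wnorm2 G U g * exp (- (decay_rate alpha c / Rpower (ln (4 * n * S / wnorm2 G U g)) alpha)).
Proof.
  intros Hp HU Ha Hc HM HFK Hg HgS Hn HSn [HE HES].
  set (E := wnorm2 G U g) in *. set (L := ln (4 * n * S / E)). set (K := log_absorb_const alpha c).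
  pose proof (log_absorb_const_ge alpha c Ha Hc) as HK. fold K in HK.
  assert (HL : 1 <= L) by (apply ln_ge1, Rle_div_r; nra).
  set (R0 := Rpower (K * L) alpha).
  assert (HR0 : 1 <= R0) by (apply Rpower_ge1; nra).
  set (th := c / (8 * R0)). assert (Hth : 0 < th) by (apply Rdiv_lt_0_compat; lra).
  set (s := E / (4 * S)). assert (Hs : 0 < s) by (apply Rdiv_lt_0_compat; lra).
  set (t := th * E / S). assert (Ht : 0 < t) by (apply Rdiv_lt_0_compat; nra).
  set (h := fun x => trunc s (g x)). set (B := active_set G U h t).
  pose proof (wnorm2_trunc_half G Hp U g S Hg HgS ltac:(lra)) as Hh. fold E s h in Hh.
  destruct (active_set_lambda G Hp U HU h t (fun x _ => trunc_nonneg s (g x)) ltac:(lra))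
    as [m [Hml Hmr]].
  assert (Hm : c / R0 <= m).
  { apply (HFK B m (Rmax (2 * M) (S / s + S / t)) (K * L)).
    - apply active_set_nodup, HU.
    - exact Hml.
    - eapply Rle_trans; [apply piset_active_set_le; auto|].
      eapply Rle_trans; [|apply Rmax_r].
      apply Rplus_le_compat; unfold Rdiv; apply Rmult_le_compat_r; auto;
        left; apply Rinv_0_lt_compat; auto.
    - apply Rmax_l.
    - replace (S / s + S / t) with (S * S / E * (4 + 8 * R0 / c)) by (unfold s, t, th; field; lra).
      apply ln_volume_le; auto. }
  pose proof (killed_energy_drop G Hp U HU g s t m Hg (Rlt_le _ _ Hs) (Rlt_le _ _ Ht) Hmr) as Hdrop.
  fold h E in Hdrop.
  assert (Hts : t * wmass G U g <= th * E).
  { replace (th * E) with (t * S) by (unfold t; field; lra). apply Rmult_le_compat_l; lra. }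
  assert (Hm8 : 8 * th <= m) by (replace (8 * th) with (c / R0) by (unfold th; field; lra); exact Hm).
  assert (Hstep : wnorm2 G U (killed G U g) <= E * (1 - 3 * th)) by nra.
  eapply Rle_trans; [exact Hstep|]. apply Rmult_le_compat_l; [lra|].
  replace (3 * th) with (decay_rate alpha c / Rpower L alpha).
  - pose proof (exp_ineq1_le (- (decay_rate alpha c / Rpower L alpha))). lra.
  - unfold decay_rate, th, R0. fold K. rewrite <- Rpower_mult_distr by lra.
    pose proof (Rpower_pos K alpha). pose proof (Rpower_pos L alpha). field. lra.
Qed.

(** * Return probabilities through the killed walk *)

Fixpoint ball {V} (G : LFGraph V) (j : nat) (x : V) : list V :=
  match j with O => [x] | S j' => x :: flat_map (ball G j') (nbrs G x) end.

Fixpoint ball_within {V} (G : LFGraph V) (U : list V) (j : nat) (x : V) : Prop :=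
  In x U /\ match j with O => True | S j' => forall w, In w (nbrs G x) -> ball_within G U j' w end.

Lemma ball_center {V} (G : LFGraph V) j x : In x (ball G j x).
Proof. destruct j; simpl; auto. Qed.

Lemma ball_within_incl {V} (G : LFGraph V) U j x : incl (ball G j x) U -> ball_within G U j x.
Proof.
  revert x. induction j; intros x H; simpl; split; try (apply H; simpl; auto).
  - exact I.
  - intros w Hw. apply IHj. intros y Hy. apply H. simpl. right. apply in_flat_map. eauto.
Qed.

Section KilledIterates.
Context {V : Type} (G : LFGraph V).
Hypothesis deg_pos : forall v, 0 < piv G v.
Variables U D : list V.
Hypotheses (U_nodup : NoDup U) (D_nodup : NoDup D) (D_incl : incl D U).

Fixpoint killed_iter (j : nat) : V -> R :=
  match j with O => fun x => indic (In x D) | S j' => killed G U (killed_iter j') end.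

Lemma killed_iter_nonneg j x : 0 <= killed_iter j x.
Proof.
  revert x; induction j; intro x; simpl; [apply indic_nonneg|]. apply killed_nonneg; auto.
Qed.

Lemma sumR_Pk_killed_iter j x : ball_within G U j x -> sumR D (Pk G j x) = killed_iter j x.
Proof.
  revert x. induction j; intros x Hb; simpl.
  - destruct (classic (In x D)) as [Hx|Hx].
    + rewrite indic_true by auto.
      transitivity (sumR D (fun v => indic (x = v) * 1)); [apply sumR_ext; intros; simpl; ring|].
      apply (sumR_indic_eq D x (fun _ => 1)); auto.
    + rewrite indic_false by auto. transitivity (sumR D (fun _ => 0)); [|apply sumR_zero].
      apply sumR_ext. intros v Hv. apply indic_false. intros ->; tauto.
  - destruct Hb as [HxU Hb]. rewrite sumR_comm. unfold killed.
    rewrite (sumR_ext U _ (fun w => indic (In w (nbrs G x)) * (/ piv G x * killed_iter j w))).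
    2:{ intros w _. unfold Pmat, adj. pose proof (deg_pos x). field. lra. }
    rewrite sumR_indic_In; auto using nbrs_nodup.
    + apply sumR_ext. intros w Hw. rewrite sumR_scal_l, IHj; auto.
    + intros w Hw. destruct j; apply (Hb w Hw).
Qed.

Lemma killed_iter_0 : wmass G U (killed_iter 0) = piset G D /\ wnorm2 G U (killed_iter 0) = piset G D.
Proof.
  unfold piset, wmass, wnorm2. simpl.
  rewrite <- (sumR_indic_In U D (piv G)) by auto. split; apply sumR_ext; intros x _.
  - ring.
  - unfold indic. destruct (excluded_middle_informative (In x D)); ring.
Qed.

Lemma wmass_killed_iter_le j : wmass G U (killed_iter j) <= piset G D.
Proof.
  induction j.
  - rewrite (proj1 killed_iter_0). lra.
  - eapply Rle_trans; [apply wmass_killed_le; auto|exact IHj]. intros; apply killed_iter_nonneg.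
Qed.

Lemma wnorm2_killed_iter_succ_le j : wnorm2 G U (killed_iter (S j)) <= wnorm2 G U (killed_iter j).
Proof.
  pose proof (dirichlet2_nonneg G deg_pos U (killed_iter j) U_nodup).
  rewrite dirichlet2_killed in H by auto. simpl. lra.
Qed.

Lemma wnorm2_killed_iter_le j : wnorm2 G U (killed_iter j) <= piset G D.
Proof.
  induction j.
  - rewrite (proj2 killed_iter_0). lra.
  - eapply Rle_trans; [apply wnorm2_killed_iter_succ_le|exact IHj].
Qed.

End KilledIterates.

(* Once [E j] drops below [A e^{-l}] we are done; above it, [ln (4 n A / E j) <= 2 l]. *)
Lemma energy_iteration_bound (E : nat -> R) (A n cp alpha l : R) :
  0 <= alpha -> 0 < cp -> 0 < A -> 1 <= n -> ln (4 * n) <= l ->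
  (forall j, 0 <= E j <= A) -> (forall j, E (S j) <= E j) ->
  (forall j, 0 < E j -> E (S j) <= E j * exp (- (cp / Rpower (ln (4 * n * A / E j)) alpha))) ->
  forall j, E j <= A * exp (- Rmin l (INR j * (cp / Rpower (2 * l) alpha))).
Proof.
  intros Ha Hcp HA Hn Hl HE Hdec Hstep.
  assert (H4n : 4 <= 4 * n) by lra.
  assert (Hl1 : 1 <= l) by (pose proof (ln_ge1 _ H4n); lra).
  set (d := cp / Rpower (2 * l) alpha).
  assert (Hd : 0 < d) by (apply Rdiv_lt_0_compat; auto; apply Rpower_pos).
  induction j.
  - simpl. rewrite Rmult_0_l, Rmin_right, Ropp_0, exp_0 by lra. specialize (HE 0%nat). lra.
  - rewrite S_INR. destruct (Rle_dec (E j) (A * exp (- l))) as [Hsmall|Hbig].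
    + eapply Rle_trans; [apply Hdec|]. eapply Rle_trans; [exact Hsmall|].
      apply Rmult_le_compat_l; [lra|]. apply exp_le. pose proof (Rmin_l l ((INR j + 1) * d)). lra.
    + assert (HEj : 0 < E j) by (pose proof (exp_pos (- l)); nra).
      specialize (HE j). set (X := 4 * n * A / E j).
      assert (HAE : A / E j < exp l).
      { apply Rmult_lt_reg_r with (E j * exp (- l)); [apply Rmult_lt_0_compat; auto; apply exp_pos|].
        replace (A / E j * (E j * exp (- l))) with (A * exp (- l)) by (field; lra).
        replace (exp l * (E j * exp (- l))) with (E j * exp (l + - l)) by (rewrite exp_plus; ring).
        rewrite Rplus_opp_r, exp_0. lra. }
      assert (HlnX : 0 < ln X).
      { apply ln_gt0. enough (4 <= X) by lra. apply Rle_div_r; nra. }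
      assert (HlnX2 : ln X <= 2 * l).
      { unfold X. replace (4 * n * A / E j) with (4 * n * (A / E j)) by (field; lra).
        rewrite ln_mult by (try apply Rdiv_lt_0_compat; lra).
        enough (ln (A / E j) < l) by lra.
        rewrite <- (ln_exp l). apply ln_increasing; auto. apply Rdiv_lt_0_compat; lra. }
      assert (Hdl : d <= cp / Rpower (ln X) alpha).
      { unfold d, Rdiv. apply Rmult_le_compat_l; [lra|].
        apply Rinv_le_contravar; [apply Rpower_pos|]. apply Rle_Rpower_l; lra. }
      eapply Rle_trans; [apply Hstep; auto|]. fold X.
      apply Rle_trans with (E j * exp (- d)).
      { apply Rmult_le_compat_l; [lra|]. apply exp_le. lra. }
      apply Rle_trans with (A * exp (- Rmin l (INR j * d)) * exp (- d)).
      { apply Rmult_le_compat_r; [left; apply exp_pos|auto]. }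
      rewrite Rmult_assoc, <- exp_plus. apply Rmult_le_compat_l; [lra|]. apply exp_le.
      unfold Rmin. destruct (Rle_dec l (INR j * d)), (Rle_dec l ((INR j + 1) * d)); nra.
Qed.

(** * Comparison with the rate of the statement *)

Section Rate.
Variable alpha : R.
Hypothesis alpha_ge0 : 0 <= alpha.

Lemma kpow_ge1 k : (1 <= k)%nat -> 1 <= kpow k (/ (1 + alpha)).
Proof.
  intro Hk. destruct k as [|k']; [lia|]. apply Rpower_ge1.
  - apply (le_INR 1); lia.
  - left; apply Rinv_0_lt_compat; lra.
Qed.

Lemma kpow_mul_Rpower k : (1 <= k)%nat ->
  kpow k (/ (1 + alpha)) * Rpower (kpow k (/ (1 + alpha))) alpha = INR k.
Proof.
  intro Hk. destruct k as [|k']; [lia|].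
  change (kpow (S k') _) with (Rpower (INR (S k')) (/ (1 + alpha))).
  assert (HkR : 0 < INR (S k')) by (apply lt_0_INR; lia).
  rewrite <- (Rpower_1 (Rpower (INR (S k')) (/ (1 + alpha)))) at 1 by apply Rpower_pos.
  rewrite <- Rpower_plus, Rpower_mult.
  replace (/ (1 + alpha) * (1 + alpha)) with 1 by (field; lra). apply Rpower_1; auto.
Qed.

Lemma kpow_le k : (1 <= k)%nat -> kpow k (/ (1 + alpha)) <= INR k.
Proof.
  intro Hk. rewrite <- (kpow_mul_Rpower k Hk). pose proof (kpow_ge1 k Hk).
  assert (1 <= Rpower (kpow k (/ (1 + alpha))) alpha) by (apply Rpower_ge1; lra). nra.
Qed.

Lemma rate_nonneg n k : 0 <= rate alpha n k.
Proof.
  assert (H : 0 <= kpow k (/ (1 + alpha))) by (destruct k; [simpl; lra|left; apply Rpower_pos]).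
  unfold rate. destruct (Nat.eq_dec n 1); auto. apply Rmin_glb; auto.
  apply (Rle_div_r 0); [apply Rpower_pos|]. rewrite Rmult_0_l. apply pos_INR.
Qed.

Lemma rate_le_kpow n k : rate alpha n k <= kpow k (/ (1 + alpha)).
Proof. unfold rate. destruct (Nat.eq_dec n 1); [lra|apply Rmin_r]. Qed.

Lemma rate_le_div_ln n k : n <> 1%nat -> rate alpha n k <= INR k / Rpower (ln (INR n)) alpha.
Proof. intro Hn. unfold rate. destruct (Nat.eq_dec n 1); [contradiction|apply Rmin_l]. Qed.

Lemma Rpower_2mul l : 0 < l -> Rpower (2 * l) alpha = Rpower 2 alpha * Rpower l alpha.
Proof. intro Hl. rewrite Rpower_mult_distr; lra. Qed.

Variables (cp : R) (n k : nat).
Hypotheses (cp_pos : 0 < cp) (n_ge1 : (1 <= n)%nat) (k_ge1 : (1 <= k)%nat).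

Lemma rate_bound_late : ln (4 * INR n) <= kpow k (/ (1 + alpha)) ->
  Rmin 1 (cp / Rpower 2 alpha) / Rpower 3 alpha * rate alpha n k <=
  Rmin (kpow k (/ (1 + alpha)))
       (INR k * (cp / Rpower (2 * kpow k (/ (1 + alpha))) alpha)).
Proof.
  intro Hak. pose proof (kpow_ge1 k k_ge1) as Hkap. pose proof (kpow_mul_Rpower k k_ge1) as Hk.
  pose proof (rate_le_kpow n k). pose proof (rate_nonneg n k).
  set (kap := kpow k (/ (1 + alpha))) in *. set (c0 := Rmin 1 (cp / Rpower 2 alpha)).
  assert (Hc0 : 0 < c0) by (apply Rmin_pos; [lra|apply Rdiv_lt_0_compat; [lra|apply Rpower_pos]]).
  assert (Hc01 : c0 <= 1) by apply Rmin_l.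
  assert (Hc0cp : c0 <= cp / Rpower 2 alpha) by apply Rmin_r.
  pose proof (Rpower_ge1 3 alpha ltac:(lra) alpha_ge0) as H3.
  rewrite Rpower_2mul, <- Hk by lra.
  replace (kap * Rpower kap alpha * (cp / (Rpower 2 alpha * Rpower kap alpha)))
    with (kap * (cp / Rpower 2 alpha))
    by (pose proof (Rpower_pos kap alpha); pose proof (Rpower_pos 2 alpha); field; lra).
  apply Rle_trans with (c0 * kap).
  - apply Rle_trans with (c0 * rate alpha n k); [|apply Rmult_le_compat_l; lra].
    apply Rmult_le_compat_r; [lra|]. apply Rle_div_l; [lra|]. nra.
  - apply Rmin_glb; nra.
Qed.

Lemma rate_le_div_Rpower_ln : rate alpha n k / Rpower 3 alpha <= INR k / Rpower (ln (4 * INR n)) alpha.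
Proof.
  pose proof (le_INR 1 n n_ge1) as Hn. simpl in Hn.
  pose proof (Rpower_pos 3 alpha). pose proof (ln_ge1 (4 * INR n) ltac:(lra)).
  destruct (Nat.eq_dec n 1) as [->|Hn1].
  - assert (Hln4 : Rpower (ln (4 * INR 1)) alpha <= Rpower 3 alpha).
    { apply Rle_Rpower_l; auto. simpl INR in *. pose proof (ln_le_sub1 (4 * 1) ltac:(lra)). lra. }
    apply Rle_trans with (INR k / Rpower 3 alpha).
    + unfold Rdiv. apply Rmult_le_compat_r; [left; apply Rinv_0_lt_compat; lra|].
      eapply Rle_trans; [apply rate_le_kpow|apply kpow_le; auto].
    + unfold Rdiv. apply Rmult_le_compat_l; [apply pos_INR|].
      apply Rinv_le_contravar; [apply Rpower_pos|exact Hln4].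
  - assert (Hn2 : 2 <= INR n) by (apply (le_INR 2); lia).
    set (Ln := ln (INR n)). assert (HLn : 0 < Ln) by (apply ln_gt0; lra).
    assert (Ha3 : ln (4 * INR n) <= 3 * Ln).
    { unfold Ln. replace (3 * ln (INR n)) with (ln (INR n * INR n * INR n))
        by (rewrite !ln_mult by nra; ring).
      apply ln_le; nra. }
    assert (HAle : Rpower (ln (4 * INR n)) alpha <= Rpower 3 alpha * Rpower Ln alpha).
    { rewrite Rpower_mult_distr by lra. apply Rle_Rpower_l; auto; lra. }
    pose proof (Rpower_pos Ln alpha).
    apply Rle_trans with (INR k / Rpower Ln alpha / Rpower 3 alpha).
    + unfold Rdiv at 1. apply Rmult_le_compat_r; [left; apply Rinv_0_lt_compat; lra|].
      apply rate_le_div_ln; auto.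
    + replace (INR k / Rpower Ln alpha / Rpower 3 alpha)
        with (INR k / (Rpower 3 alpha * Rpower Ln alpha)) by (field; lra).
      unfold Rdiv. apply Rmult_le_compat_l; [apply pos_INR|].
      apply Rinv_le_contravar; [apply Rpower_pos|exact HAle].
Qed.

Lemma rate_bound_early : kpow k (/ (1 + alpha)) < ln (4 * INR n) ->
  Rmin 1 (cp / Rpower 2 alpha) / Rpower 3 alpha * rate alpha n k <=
  Rmin (ln (4 * INR n)) (INR k * (cp / Rpower (2 * ln (4 * INR n)) alpha)).
Proof.
  intro Hka. pose proof (kpow_ge1 k k_ge1) as Hkap. pose proof (kpow_mul_Rpower k k_ge1) as Hk.
  pose proof (le_INR 1 n n_ge1) as Hn. simpl in Hn.
  set (a := ln (4 * INR n)) in *. assert (Ha1 : 1 <= a) by (apply ln_ge1; lra).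
  set (kap := kpow k (/ (1 + alpha))) in *. set (c0 := Rmin 1 (cp / Rpower 2 alpha)).
  assert (Hc0 : 0 < c0) by (apply Rmin_pos; [lra|apply Rdiv_lt_0_compat; [lra|apply Rpower_pos]]).
  assert (Hc01 : c0 <= 1) by apply Rmin_l.
  assert (Hc0cp : c0 <= cp / Rpower 2 alpha) by apply Rmin_r.
  set (A := Rpower a alpha). assert (HA : 1 <= A) by (apply Rpower_ge1; lra).
  assert (Hk0 : 0 <= INR k / A) by (apply (Rle_div_r 0); [lra|]; rewrite Rmult_0_l; apply pos_INR).
  assert (HkA : INR k / A < a).
  { apply Rmult_lt_reg_r with A; [lra|]. replace (INR k / A * A) with (INR k) by (field; lra).
    rewrite <- Hk. assert (Rpower kap alpha <= A) by (apply Rle_Rpower_l; lra).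
    pose proof (Rpower_pos kap alpha). nra. }
  apply Rle_trans with (c0 * (INR k / A)).
  - replace (c0 / Rpower 3 alpha * rate alpha n k) with (c0 * (rate alpha n k / Rpower 3 alpha))
      by (pose proof (Rpower_pos 3 alpha); field; lra).
    apply Rmult_le_compat_l; [lra|]. apply rate_le_div_Rpower_ln.
  - rewrite Rpower_2mul by lra. fold A. apply Rmin_glb; [nra|].
    replace (INR k * (cp / (Rpower 2 alpha * A))) with ((cp / Rpower 2 alpha) * (INR k / A))
      by (pose proof (Rpower_pos 2 alpha); field; lra).
    apply Rmult_le_compat_r; auto.
Qed.

End Rate.

Lemma rate_bound alpha cp n k : 0 <= alpha -> 0 < cp -> (1 <= n)%nat ->
  Rmin 1 (cp / Rpower 2 alpha) / Rpower 3 alpha * rate alpha n k <=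
  Rmin (Rmax (ln (4 * INR n)) (kpow k (/ (1 + alpha))))
       (INR k * (cp / Rpower (2 * Rmax (ln (4 * INR n)) (kpow k (/ (1 + alpha)))) alpha)).
Proof.
  intros Ha Hcp Hn. destruct k as [|k'].
  - assert (Hr : rate alpha n 0 = 0).
    { unfold rate. destruct (Nat.eq_dec n 1); [reflexivity|]. simpl. unfold Rdiv.
      rewrite Rmult_0_l. apply Rmin_left. lra. }
    rewrite Hr, Rmult_0_r. simpl INR. rewrite Rmult_0_l. apply Rmin_glb; [apply Rmax_r|lra].
  - apply Rmax_case_strong; intro Hcase.
    + destruct (Req_dec (ln (4 * INR n)) (kpow (S k') (/ (1 + alpha)))) as [Heq|Hne].
      * rewrite Heq. apply rate_bound_late; auto; lia || lra.
      * apply rate_bound_early; auto; [lia|lra].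
    + apply rate_bound_late; auto. lia.
Qed.

Lemma deg_pos_of_connected {V} (G : LFGraph V) :
  infinite_type V -> graph_connected G -> forall v, 0 < piv G v.
Proof.
  intros Hinf Hc v. destruct (Hinf [v]) as [w Hw].
  assert (Hne : v <> w) by (intros ->; apply Hw; simpl; auto).
  pose proof (Hc v w) as H. apply clos_rt_rt1n in H. destruct H as [|y z Hy _]; [tauto|].
  unfold piv, deg. unfold adj in Hy. destruct (nbrs G v) as [|u l]; [destruct Hy|].
  simpl length. rewrite S_INR. pose proof (pos_INR (length l)). lra.
Qed.

Lemma max_ratio_ge {V} (G : LFGraph V) D u v :
  In u D -> In v D -> piv G u / piv G v <= max_ratio G D.
Proof.
  intros Hu Hv. unfold max_ratio.
  assert (Hin : In (piv G u / piv G v) (map (fun p => piv G (fst p) / piv G (snd p)) (list_prod D D)))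
    by (change (piv G u / piv G v) with ((fun p => piv G (fst p) / piv G (snd p)) (u, v));
        apply in_map, in_prod; auto).
  induction (map _ _) as [|r l IH]; simpl in *; [tauto|].
  destruct Hin as [<-|Hin]; [apply Rmax_l|]. eapply Rle_trans; [apply IH, Hin|apply Rmax_r].
Qed.

Lemma max_ratio_nonneg {V} (G : LFGraph V) D : D <> [] -> (forall v, 0 < piv G v) ->
  0 <= max_ratio G D.
Proof.
  intros HD Hp. destruct D as [|d0 D']; [congruence|].
  eapply Rle_trans; [|apply (max_ratio_ge G _ d0 d0); simpl; auto].
  apply (Rle_div_r 0); [auto|]. rewrite Rmult_0_l. left; auto.
Qed.

Lemma sumR_inv_piv_mul_piset_le {V} (G : LFGraph V) D : (forall v, 0 < piv G v) ->
  sumR D (fun x => / piv G x) * piset G D <= INR (length D) * INR (length D) * max_ratio G D.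
Proof.
  intro Hp. unfold piset. rewrite <- sumR_scal_r.
  apply Rle_trans with (sumR D (fun _ => INR (length D) * max_ratio G D)); [|rewrite sumR_const; lra].
  apply sumR_le. intros x Hx. rewrite <- sumR_scal_l, <- sumR_const. apply sumR_le. intros y Hy.
  pose proof (max_ratio_ge G D y x Hy Hx). unfold Rdiv in H. lra.
Qed.

Definition ball_cover {V} (G : LFGraph V) (k : nat) (D : list V) : list V :=
  nodup eq_dec_classic (flat_map (ball G k) D).

Lemma ball_cover_nodup {V} (G : LFGraph V) k D : NoDup (ball_cover G k D).
Proof. apply NoDup_nodup. Qed.

Lemma ball_within_cover {V} (G : LFGraph V) k D u : In u D -> ball_within G (ball_cover G k D) k u.
Proof.
  intro Hu. apply ball_within_incl. intros x Hx. apply nodup_In, in_flat_map. eauto.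
Qed.

Lemma incl_ball_cover {V} (G : LFGraph V) k D : incl D (ball_cover G k D).
Proof. intros u Hu. apply nodup_In, in_flat_map. exists u. split; auto. apply ball_center. Qed.

Section ReturnProbability.
Context {V : Type} (G : LFGraph V).
Hypothesis deg_pos : forall v, 0 < piv G v.
Variables (D : list V) (k : nat).
Hypotheses (D_nodup : NoDup D) (D_nonempty : D <> []).

Let U := ball_cover G k D.
Let E := wnorm2 G U (killed_iter G U D k).

Lemma piset_pos : 0 < piset G D.
Proof.
  destruct D as [|d0 D']; [congruence|].
  apply sumR_pos with d0; simpl; auto. intros; left; auto.
Qed.

Lemma prob_return_le_energy :
  prob_return G D k <= sqrt (max_ratio G D) * sqrt (E / piset G D).
Proof.
  set (nR := INR (length D)). set (u := killed_iter G U D k).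
  assert (HnR : 1 <= nR).
  { unfold nR. destruct D; [congruence|]. simpl length. rewrite S_INR.
    pose proof (pos_INR (length l)). lra. }
  pose proof piset_pos as HS0. pose proof (max_ratio_nonneg G D D_nonempty deg_pos) as Hmr.
  pose proof (sumR_inv_piv_mul_piset_le G D deg_pos) as HHS. fold nR in HHS.
  assert (Hu : forall x, 0 <= u x) by (intro; apply killed_iter_nonneg; auto).
  unfold prob_return. rewrite (sumR_ext D _ u).
  2:{ intros x Hx. apply (sumR_Pk_killed_iter G deg_pos U D (ball_cover_nodup G k D) D_nodup).
      apply ball_within_cover; auto. }
  set (T := sumR D u). assert (HT : 0 <= T) by (apply sumR_nonneg; auto).
  set (Hs := sumR D (fun x => / piv G x)) in *.
  assert (HHs : 0 <= Hs) by (apply sumR_nonneg; intros; left; apply Rinv_0_lt_compat; auto).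
  assert (HCS : T ^ 2 <= Hs * E).
  { eapply Rle_trans; [apply cauchy_schwarz_weighted; auto|]. apply Rmult_le_compat_l; auto.
    unfold E, wnorm2. apply sumR_incl_le; [apply ball_cover_nodup|exact D_nodup|apply incl_ball_cover|].
    intros; apply Rmult_le_pos; [left; auto|apply pow2_ge_0]. }
  assert (HT2 : (/ nR * T) ^ 2 <= max_ratio G D * (E / piset G D)).
  { assert (HE0 : 0 <= E) by apply wnorm2_nonneg, deg_pos.
    replace ((/ nR * T) ^ 2) with (/ nR ^ 2 * T ^ 2) by (field; lra).
    apply Rle_trans with (/ nR ^ 2 * (nR * nR * max_ratio G D / piset G D * E)).
    - apply Rmult_le_compat_l; [left; apply Rinv_0_lt_compat, pow_lt; lra|].
      eapply Rle_trans; [exact HCS|]. apply Rmult_le_compat_r; auto. apply Rle_div_r; auto.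
    - right. field. lra. }
  assert (HnT : 0 <= / nR * T) by (apply Rmult_le_pos; auto; left; apply Rinv_0_lt_compat; lra).
  fold nR. rewrite <- sqrt_mult_alt, <- (sqrt_pow2 (/ nR * T)) by auto.
  apply sqrt_le_1_alt, HT2.
Qed.

Definition rate_const (alpha c : R) : R :=
  Rmin 1 (decay_rate alpha c / Rpower 2 alpha) / Rpower 3 alpha.

Lemma killed_energy_decay alpha c M : 0 <= alpha -> 0 < c -> 0 < M ->
  (forall v, piv G v <= M) -> faber_krahn G alpha c M ->
  E / piset G D <= exp (- (rate_const alpha c * rate alpha (length D) k)).
Proof.
  intros Ha Hc HM HpM HFK.
  set (n := INR (length D)). set (S0 := piset G D). pose proof piset_pos as HS0. fold S0 in HS0.
  assert (Hn : (1 <= length D)%nat) by (destruct D; [congruence|simpl; lia]).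
  assert (HnR : 1 <= n) by (apply (le_INR 1), Hn).
  assert (HS0n : S0 <= n * M) by (unfold S0, piset, n; rewrite <- sumR_const; apply sumR_le; auto).
  pose proof (ball_cover_nodup G k D) as HU. pose proof (incl_ball_cover G k D) as HDU.
  fold U in HU, HDU.
  set (l := Rmax (ln (4 * n)) (kpow k (/ (1 + alpha)))).
  pose proof (decay_rate_pos alpha c Hc) as Hcp.
  assert (Hdecay : E <= S0 * exp (- Rmin l (INR k * (decay_rate alpha c / Rpower (2 * l) alpha)))).
  { apply (energy_iteration_bound (fun j => wnorm2 G U (killed_iter G U D j)) S0 n); auto.
    - apply Rmax_l.
    - intro j. split; [apply wnorm2_nonneg; auto|apply wnorm2_killed_iter_le; auto].
    - intro j. apply wnorm2_killed_iter_succ_le; auto.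
    - intros j Hj. apply (killed_energy_step G U alpha c M n S0); auto.
      + intros; apply killed_iter_nonneg; auto.
      + apply wmass_killed_iter_le; auto.
      + split; auto. apply wnorm2_killed_iter_le; auto. }
  pose proof (rate_bound alpha (decay_rate alpha c) (length D) k Ha Hcp Hn) as Hrate.
  fold n l in Hrate. fold (rate_const alpha c) in Hrate.
  apply Rle_div_l; auto. eapply Rle_trans; [exact Hdecay|].
  rewrite Rmult_comm. apply Rmult_le_compat_r; [lra|]. apply exp_le. lra.
Qed.

End ReturnProbability.

Lemma rate_const_pos alpha c : 0 < c -> 0 < rate_const alpha c.
Proof.
  intro Hc. apply Rdiv_lt_0_compat; [|apply Rpower_pos]. apply Rmin_pos; [lra|].
  apply Rdiv_lt_0_compat; [apply decay_rate_pos; auto|apply Rpower_pos].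
Qed.

Theorem proposition3p4 :
  forall alpha c : R, 0 <= alpha -> 0 < c ->
  exists c1 : R, 0 < c1 /\
    forall (V : Type) (G : LFGraph V),
      infinite_type V -> graph_connected G -> SP_cond G alpha c ->
      forall (D : list V) (k : nat), D <> nil -> NoDup D ->
        prob_return G D k <=
        sqrt (max_ratio G D) * exp (- c1 * rate alpha (length D) k).
Proof.
  intros alpha c Ha Hc. pose proof (rate_const_pos alpha c Hc) as Hc1.
  exists (rate_const alpha c / 2). split; [lra|].
  intros V G Hinf Hconn HSP D k HD HDnd.
  pose proof (deg_pos_of_connected G Hinf Hconn) as Hdeg.
  destruct (SP_faber_krahn G Hdeg alpha c Ha Hc HSP) as [M [HM [HpM HFK]]].
  eapply Rle_trans; [apply prob_return_le_energy; auto|].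
  apply Rmult_le_compat_l; [apply sqrt_pos|].
  set (r := rate alpha (length D) k).
  replace (exp (- (rate_const alpha c / 2) * r)) with (sqrt (exp (- (rate_const alpha c * r)))).
  - apply sqrt_le_1_alt, (killed_energy_decay G Hdeg D k HDnd HD alpha c M); auto.
  - rewrite <- (sqrt_pow2 (exp (- (rate_const alpha c / 2) * r))) by (left; apply exp_pos).
    f_equal. replace (- (rate_const alpha c * r))
      with (- (rate_const alpha c / 2) * r + - (rate_const alpha c / 2) * r) by field.
    rewrite exp_plus. ring.
Qed.
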